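(* Let $R$ be a Noetherian ring and $\Gamma$ a finitely generated group with a word metric. Declare a morphism $\phi\colon(F,\Sigma_F)\to(F',\Sigma_{F'})$ of $\mathbf{B}_\times(R[\Gamma])$ to be an admissible monomorphism if $\phi$ is injective and $s(\phi)\colon s(F,\Sigma_F)\to s(F',\Sigma_{F'})$ is boundedly bicontrolled (equivalently, $s(\phi)$ is an admissible monomorphism of $\mathbf{B}(\Gamma,R)$), and an admissible epimorphism if $s(\phi)$ is an admissible epimorphism of $\mathbf{B}(\Gamma,R)$. This choice defines an exact structure on $\mathbf{B}_\times(R[\Gamma])$, and with respect to it the functors $s\colon\mathbf{B}_\times(R[\Gamma])\to\mathbf{B}(\Gamma,R)$ and $s_\Gamma\colon\mathbf{B}_\times(R[\Gamma])\to\mathbf{B}_{\Gamma,0}(\Gamma,R)^\Gamma$ are exact.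
   Context: Notation: $S[b]$ is the metric $b$-enlargement of $S\subset\Gamma$, $x[b]$ the $b$-ball about $x$. A $\Gamma$-filtered $R$-module is an $R$-module $F$ with an inclusion-preserving assignment $S\mapsto F(S)$ of submodules to subsets of $\Gamma$, $F(\Gamma)=F$; reduced if $F(\emptyset)=0$; lean if $F(S)\subset\sum_{x\in S}F(x[D])$ for some $D$ and all $S$; insular if $F(S)\cap F(U)\subset F(S[d]\cap U[d])$ for some $d$ and all $S,U$; locally finitely generated if $F(S)$ is finitely generated for bounded $S$. A homomorphism $f\colon F\to F'$ is boundedly controlled if $f(F(S))\subset F'(S[b])$ for some $b$ and all $S$, and boundedly bicontrolled if in addition $f(F)\cap F'(S)\subset f(F(S[b]))$ for all $S$. $\mathbf{B}(\Gamma,R)$ is the exact category of reduced, lean, insular, locally finitely generated $\Gamma$-filtered $R$-modules with boundedly controlled maps, whose exact sequences are short exact sequences with both maps boundedly bicontrolled; admissible monomorphisms/epimorphisms are the first/second maps of such sequences. $\mathbf{B}_{\Gamma,0}(\Gamma,R)^\Gamma$ is the category of pairs $(F,\psi)$, $F\in\mathbf{B}(\Gamma,R)$, $\psi(\gamma)\colon F\to\gamma F$ isomorphisms (where $\gamma F$ is $F$ refiltered by left translation by $\gamma$) satisfying $\psi(1)=1$, $\psi(\gamma_1\gamma_2)=\gamma_1\psi(\gamma_2)\psi(\gamma_1)$, with $\psi(\gamma)$ and its inverse bounded by $0$; morphisms are the $\Gamma$-equivariant morphisms, and exact sequences are those exact in $\mathbf{B}(\Gamma,R)$. For a finitely generated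 $R[\Gamma]$-module $F$ with finite generating set $\Sigma$, $s(F,\Sigma)$ is the $\Gamma$-filtered module with $F(S)=$ the $R$-submodule generated by $\{s\sigma:s\in S,\sigma\in\Sigma\}$. $F$ is properly generated if $s(F,\Sigma)$ is lean and insular for some $\Sigma$. $\mathbf{B}_\times(R[\Gamma])$ is the category of pairs $(F,\Sigma)$ with $F$ properly generated and $\Sigma$ a finite generating set, morphisms being all $R[\Gamma]$-homomorphisms; it is additive with $(F,\Sigma_F)\oplus(G,\Sigma_G)=(F\oplus G,\Sigma_F\times\Sigma_G)$. The functor $s$ sends $(F,\Sigma)$ to $s(F,\Sigma)$ and a homomorphism to itself; $s_\Gamma$ sends $(F,\Sigma)$ to $(s(F,\Sigma),\psi)$ where $\psi(\gamma)$ is the equivariance structure given by the action of $\gamma$ on $F$. *)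

From HB Require Import structures.
From mathcomp Require Import all_boot all_algebra.

Set Implicit Arguments.
Unset Strict Implicit.
Unset Printing Implicit Defensive.

Import GRing.Theory.
Local Open Scope ring_scope.

Section Modules.
Context {R : pzRingType}.

Definition is_submod (M : lmodType R) (P : M -> Prop) : Prop :=
  [/\ P 0, (forall x y, P x -> P y -> P (x + y)) &
      (forall (a : R) x, P x -> P (a *: x))].

Definition gen_submod (M : lmodType R) (X : M -> Prop) : M -> Prop :=
  fun m => forall P, is_submod P -> (forall x, X x -> P x) -> P m.

Definition fin_gen (M : lmodType R) (P : M -> Prop) : Prop :=
  exists s : seq M, forall m, P m <-> gen_submod (fun x => x \in s) m.

End Modules.

(* left Noetherian: every left ideal of R is finitely generated *)
Definition noetherian (R : pzRingType) : Prop :=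
  forall I : R^o -> Prop, is_submod I -> fin_gen I.

Section WordMetric.
Context {G : groupType} (gens : seq G).

(* a word is a list of generators with exponent +1 (true) or -1 (false) *)
Definition word_ok (w : seq (G * bool)) : bool := all (fun p => p.1 \in gens) w.

Definition word_eval (w : seq (G * bool)) : G :=
  foldr (fun p g => ((if p.2 then p.1 else p.1^-1) * g)%g) 1%g w.

Definition generates_group : Prop :=
  forall g : G, exists w, word_ok w /\ word_eval w = g.

(* d(x,y) <= n for the word metric d(x,y) = |x^-1 y| *)
Definition dist_le (x y : G) (n : nat) : Prop :=
  exists w, [/\ word_ok w, (size w <= n)%N & (x * word_eval w)%g = y].

Definition enlarge (S : G -> Prop) (n : nat) : G -> Prop :=
  fun y => exists2 x, S x & dist_le x y n.

Definition ball (x : G) (n : nat) : G -> Prop := fun y => dist_le x y n.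

Definition bounded_set (S : G -> Prop) : Prop :=
  exists x n, forall y, S y -> dist_le x y n.

End WordMetric.

Section Filtered.
Context {R : pzRingType} {G : groupType} (gens : seq G).

Definition filtration (M : lmodType R) := (G -> Prop) -> M -> Prop.

Definition is_filtration (M : lmodType R) (F : filtration M) : Prop :=
  [/\ forall S, is_submod (F S),
      (forall S U, (forall x, S x -> U x) -> forall m, F S m -> F U m) &
      forall m, F (fun _ => True) m].

Definition reduced (M : lmodType R) (F : filtration M) : Prop :=
  forall m, F (fun _ => False) m -> m = 0.

Definition lean (M : lmodType R) (F : filtration M) : Prop :=
  exists D : nat, forall S m, F S m ->
    gen_submod (fun v => exists2 x, S x & F (ball gens x D) v) m.

Definition insular (M : lmodType R) (F : filtration M) : Prop :=
  exists d : nat, forall S U m, F S m -> F U m ->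
    F (fun y => enlarge gens S d y /\ enlarge gens U d y) m.

Definition loc_fin_gen (M : lmodType R) (F : filtration M) : Prop :=
  forall S, bounded_set gens S -> fin_gen (F S).

Definition B_obj (M : lmodType R) (F : filtration M) : Prop :=
  [/\ is_filtration F, reduced F, lean F, insular F & loc_fin_gen F].

Definition bcontrolled (M N : lmodType R) (F : filtration M) (F' : filtration N)
    (f : M -> N) : Prop :=
  exists b : nat, forall S m, F S m -> F' (enlarge gens S b) (f m).

Definition bbicontrolled (M N : lmodType R) (F : filtration M) (F' : filtration N)
    (f : M -> N) : Prop :=
  exists b : nat,
    (forall S m, F S m -> F' (enlarge gens S b) (f m)) /\
    (forall S n, (exists m, f m = n) -> F' S n ->
        exists2 m, F (enlarge gens S b) m & f m = n).

Definition B_hom (M N : lmodType R) (F : filtration M) (F' : filtration N)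
    (f : M -> N) : Prop :=
  linear f /\ bcontrolled F F' f.

Definition B_exact (A B C : lmodType R) (FA : filtration A) (FB : filtration B)
    (FC : filtration C) (i : A -> B) (p : B -> C) : Prop :=
  [/\ B_obj FA /\ B_obj FB /\ B_obj FC,
      B_hom FA FB i /\ B_hom FB FC p,
      [/\ injective i, (forall c, exists b, p b = c) &
          (forall b, p b = 0 <-> exists a, i a = b)] &
      bbicontrolled FA FB i /\ bbicontrolled FB FC p].

Definition B_adm_epi (B C : lmodType R) (FB : filtration B) (FC : filtration C)
    (p : B -> C) : Prop :=
  exists (A : lmodType R) (FA : filtration A) (i : A -> B), B_exact FA FB FC i p.

Definition translate (M : lmodType R) (F : filtration M) (g : G) : filtration M :=
  fun S => F (fun x => S (g^-1 * x)%g).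

Definition Beq_obj (M : lmodType R) (F : filtration M) (psi : G -> M -> M) : Prop :=
  [/\ B_obj F,
      (forall m, psi 1%g m = m),
      (forall g1 g2 m, psi (g1 * g2)%g m = psi g1 (psi g2 m)) &
      forall g, [/\ linear (psi g),
        (forall S m, F S m -> translate F g (enlarge gens S 0) (psi g m)) &
        exists phi : M -> M, [/\ cancel (psi g) phi, cancel phi (psi g) &
          forall S m, translate F g S m -> F (enlarge gens S 0) (phi m)]]].

Definition Beq_hom (M N : lmodType R) (F : filtration M) (psi : G -> M -> M)
    (F' : filtration N) (psi' : G -> N -> N) (f : M -> N) : Prop :=
  B_hom F F' f /\ forall g m, f (psi g m) = psi' g (f m).

Definition Beq_exact (A B C : lmodType R)
    (FA : filtration A) (psiA : G -> A -> A)
    (FB : filtration B) (psiB : G -> B -> B)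
    (FC : filtration C) (psiC : G -> C -> C) (i : A -> B) (p : B -> C) : Prop :=
  [/\ Beq_obj FA psiA, Beq_obj FB psiB, Beq_obj FC psiC,
      Beq_hom FA psiA FB psiB i /\ Beq_hom FB psiB FC psiC p &
      B_exact FA FB FC i p].

End Filtered.

Section GroupRingModules.
Context {R : pzRingType} {G : groupType} (gens : seq G).

(* an R[Gamma]-module = an R-module with an R-linear left Gamma-action *)
Definition is_action (M : lmodType R) (act : G -> M -> M) : Prop :=
  [/\ forall g, linear (act g), (forall m, act 1%g m = m) &
      forall g h m, act (g * h)%g m = act g (act h m)].

Definition sfilt (M : lmodType R) (act : G -> M -> M) (Sigma : seq M) : filtration M :=
  fun S => gen_submod (fun m => exists s, exists2 sg, sg \in Sigma & S s /\ m = act s sg).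

Definition generates_mod (M : lmodType R) (act : G -> M -> M) (Sigma : seq M) : Prop :=
  forall m, sfilt act Sigma (fun _ => True) m.

Definition properly_generated (M : lmodType R) (act : G -> M -> M) : Prop :=
  exists Sigma, [/\ generates_mod act Sigma, lean gens (sfilt act Sigma) &
                    insular gens (sfilt act Sigma)].

Record Bx_obj := BxObj {
  bx_mod : lmodType R;
  bx_act : G -> bx_mod -> bx_mod;
  bx_gens : seq bx_mod;
  bx_actP : is_action bx_act;
  bx_gensP : generates_mod bx_act bx_gens;
  bx_proper : properly_generated bx_act }.

Arguments bx_act : clear implicits.
Arguments bx_gens : clear implicits.

Definition s_filt (A : Bx_obj) : filtration (bx_mod A) := sfilt (bx_act A) (bx_gens A).
Arguments s_filt : clear implicits.

Definition Bx_hom (A B : Bx_obj) (f : bx_mod A -> bx_mod B) : Prop :=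
  linear f /\ forall g m, f (bx_act A g m) = bx_act B g (f m).

Definition Bx_adm_mono (A B : Bx_obj) (f : bx_mod A -> bx_mod B) : Prop :=
  [/\ Bx_hom f, injective f & bbicontrolled gens (s_filt A) (s_filt B) f].

Definition Bx_adm_epi (A B : Bx_obj) (f : bx_mod A -> bx_mod B) : Prop :=
  Bx_hom f /\ B_adm_epi gens (s_filt A) (s_filt B) f.

Definition Bx_is_kernel (A B C : Bx_obj) (i : bx_mod A -> bx_mod B)
    (p : bx_mod B -> bx_mod C) : Prop :=
  (forall a, p (i a) = 0) /\
  forall (X : Bx_obj) (f : bx_mod X -> bx_mod B), Bx_hom f ->
    (forall x, p (f x) = 0) ->
    exists g, [/\ Bx_hom g, (forall x, i (g x) = f x) &
      forall g', Bx_hom g' -> (forall x, i (g' x) = f x) -> forall x, g' x = g x].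

Definition Bx_is_cokernel (A B C : Bx_obj) (i : bx_mod A -> bx_mod B)
    (p : bx_mod B -> bx_mod C) : Prop :=
  (forall a, p (i a) = 0) /\
  forall (X : Bx_obj) (f : bx_mod B -> bx_mod X), Bx_hom f ->
    (forall a, f (i a) = 0) ->
    exists h, [/\ Bx_hom h, (forall b, h (p b) = f b) &
      forall h', Bx_hom h' -> (forall b, h' (p b) = f b) -> forall c, h' c = h c].

Definition Bx_kercoker (A B C : Bx_obj) (i : bx_mod A -> bx_mod B)
    (p : bx_mod B -> bx_mod C) : Prop :=
  [/\ Bx_hom i, Bx_hom p, Bx_is_kernel i p & Bx_is_cokernel i p].

Definition Bx_exact (A B C : Bx_obj) (i : bx_mod A -> bx_mod B)
    (p : bx_mod B -> bx_mod C) : Prop :=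
  [/\ Bx_kercoker i p, Bx_adm_mono i & Bx_adm_epi p].

Definition E_mono (A B : Bx_obj) (i : bx_mod A -> bx_mod B) : Prop :=
  exists (C : Bx_obj) (p : bx_mod B -> bx_mod C), Bx_exact i p.

Definition E_epi (B C : Bx_obj) (p : bx_mod B -> bx_mod C) : Prop :=
  exists (A : Bx_obj) (i : bx_mod A -> bx_mod B), Bx_exact i p.

Definition Bx_iso (A A' : Bx_obj) (f : bx_mod A -> bx_mod A') : Prop :=
  Bx_hom f /\ exists g, [/\ Bx_hom g, cancel f g & cancel g f].

Definition Bx_pushout (A B A' B' : Bx_obj) (i : bx_mod A -> bx_mod B)
    (f : bx_mod A -> bx_mod A') (i' : bx_mod A' -> bx_mod B')
    (f' : bx_mod B -> bx_mod B') : Prop :=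
  [/\ Bx_hom i' /\ Bx_hom f', (forall a, f' (i a) = i' (f a)) &
    forall (X : Bx_obj) (u : bx_mod B -> bx_mod X) (v : bx_mod A' -> bx_mod X),
      Bx_hom u -> Bx_hom v -> (forall a, u (i a) = v (f a)) ->
      exists h, [/\ Bx_hom h, (forall b, h (f' b) = u b), (forall a', h (i' a') = v a') &
        forall h', Bx_hom h' -> (forall b, h' (f' b) = u b) ->
          (forall a', h' (i' a') = v a') -> forall y, h' y = h y]].

Definition Bx_pullback (A C C' A' : Bx_obj) (p : bx_mod A -> bx_mod C)
    (f : bx_mod C' -> bx_mod C) (p' : bx_mod A' -> bx_mod C')
    (f' : bx_mod A' -> bx_mod A) : Prop :=
  [/\ Bx_hom p' /\ Bx_hom f', (forall y, p (f' y) = f (p' y)) &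
    forall (X : Bx_obj) (u : bx_mod X -> bx_mod A) (v : bx_mod X -> bx_mod C'),
      Bx_hom u -> Bx_hom v -> (forall x, p (u x) = f (v x)) ->
      exists h, [/\ Bx_hom h, (forall x, f' (h x) = u x), (forall x, p' (h x) = v x) &
        forall h', Bx_hom h' -> (forall x, f' (h' x) = u x) ->
          (forall x, p' (h' x) = v x) -> forall x, h' x = h x]].

(* Quillen's axioms (in the form of Buehler, "Exact categories", Def. 2.1)
   for the class E = Bx_exact, together with the requirement that the
   admissible monos/epis of E are exactly the declared ones. *)
Definition Bx_exact_structure : Prop :=
  [/\
    (forall (A B C A' B' C' : Bx_obj) i p i' p' a b c,
        Bx_exact (A:=A) (B:=B) (C:=C) i p ->
        Bx_kercoker (A:=A') (B:=B') (C:=C') i' p' ->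
        Bx_iso a -> Bx_iso b -> Bx_iso c ->
        (forall x, b (i x) = i' (a x)) -> (forall y, c (p y) = p' (b y)) ->
        Bx_exact i' p'),
    (forall (A B : Bx_obj) (i : bx_mod A -> bx_mod B), Bx_adm_mono i -> E_mono i) /\
    (forall (B C : Bx_obj) (p : bx_mod B -> bx_mod C), Bx_adm_epi p -> E_epi p),
    (forall A : Bx_obj, E_mono (A:=A) (B:=A) id /\ E_epi (B:=A) (C:=A) id),
    (forall (A B C : Bx_obj) (i : bx_mod A -> bx_mod B) (j : bx_mod B -> bx_mod C),
        E_mono i -> E_mono j -> E_mono (j \o i)) /\
    (forall (A B C : Bx_obj) (p : bx_mod A -> bx_mod B) (q : bx_mod B -> bx_mod C),
        E_epi p -> E_epi q -> E_epi (q \o p)) &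
    (forall (A B A' : Bx_obj) (i : bx_mod A -> bx_mod B) (f : bx_mod A -> bx_mod A'),
        E_mono i -> Bx_hom f ->
        exists (B' : Bx_obj) (i' : bx_mod A' -> bx_mod B') (f' : bx_mod B -> bx_mod B'),
          Bx_pushout i f i' f' /\ E_mono i') /\
    (forall (A C C' : Bx_obj) (p : bx_mod A -> bx_mod C) (f : bx_mod C' -> bx_mod C),
        E_epi p -> Bx_hom f ->
        exists (A' : Bx_obj) (p' : bx_mod A' -> bx_mod C') (f' : bx_mod A' -> bx_mod A),
          Bx_pullback p f p' f' /\ E_epi p')].

Definition s_exact : Prop :=
  forall (A B C : Bx_obj) (i : bx_mod A -> bx_mod B) (p : bx_mod B -> bx_mod C),
    Bx_exact i p -> B_exact gens (s_filt A) (s_filt B) (s_filt C) i p.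

(* the functor s_Gamma is exact: s_Gamma(F,Sigma) = (s(F,Sigma), action) *)
Definition sGamma_exact : Prop :=
  forall (A B C : Bx_obj) (i : bx_mod A -> bx_mod B) (p : bx_mod B -> bx_mod C),
    Bx_exact i p ->
    Beq_exact gens (s_filt A) (bx_act A) (s_filt B) (bx_act B)
                   (s_filt C) (bx_act C) i p.

End GroupRingModules.

(* Every R[Gamma]-linear map between objects of B_x(R[Gamma]) is boundedly
   controlled for the filtrations s(F, Sigma): the images of the finitely many
   generators lie in a common ball around 1, and equivariance carries that ball
   to every s in Gamma.  So the kernel, cokernel, pullback and pushout of
   R[Gamma]-modules, with the evident finite generating sets, stay in B_x:
   leanness is automatic for s(F, Sigma), and insularity passes through bounded
   equivalence of filtrations, through quotients (a difference of coset
   representatives is split along S \/ U), and to the kernel, generated by a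
   finite generating set of the piece over a ball around 1 of the given
   B(Gamma, R)-kernel.  Exact sequences of B_x are thus exactly the short exact
   sequences of R[Gamma]-modules with boundedly bicontrolled maps, which makes s
   and s_Gamma exact and reduces the axioms to closure of bicontrolled maps under
   composition, isomorphism, pushout and pullback. *)

From HB Require Import structures.
From mathcomp Require Import all_boot all_algebra.
From Stdlib Require Import ClassicalEpsilon FunctionalExtensionality PropExtensionality.

Set Implicit Arguments.
Unset Strict Implicit.
Unset Printing Implicit Defensive.

Import GRing.Theory.
Local Open Scope ring_scope.

Section Submodules.
Context {R : pzRingType}.

Lemma lin0 (M N : lmodType R) (f : M -> N) : linear f -> f 0 = 0.
Proof.
move=> lf; have := lf 1 0 0; rewrite scale1r addr0 scale1r => h.
by move: (congr1 (fun v => v - f 0) h); rewrite subrr addrK.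
Qed.

Lemma linD (M N : lmodType R) (f : M -> N) x y : linear f -> f (x + y) = f x + f y.
Proof. by move=> lf; have := lf 1 x y; rewrite !scale1r. Qed.

Lemma linZ (M N : lmodType R) (f : M -> N) a x : linear f -> f (a *: x) = a *: f x.
Proof. by move=> lf; have := lf a x 0; rewrite !addr0 (lin0 lf) addr0. Qed.

Lemma linN (M N : lmodType R) (f : M -> N) x : linear f -> f (- x) = - f x.
Proof. by move=> lf; rewrite -scaleN1r linZ // scaleN1r. Qed.

Lemma linB (M N : lmodType R) (f : M -> N) x y : linear f -> f (x - y) = f x - f y.
Proof. by move=> lf; rewrite linD // linN. Qed.

Lemma lin_comp (M N P : lmodType R) (f : M -> N) (g : N -> P) :
  linear f -> linear g -> linear (g \o f).
Proof. by move=> lf lg a x y /=; rewrite lf lg. Qed.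

Lemma submodN (M : lmodType R) (P : M -> Prop) x : is_submod P -> P x -> P (- x).
Proof. by case=> _ _ hZ px; rewrite -scaleN1r; apply: hZ. Qed.

Lemma submodB (M : lmodType R) (P : M -> Prop) x y :
  is_submod P -> P x -> P y -> P (x - y).
Proof. by move=> hP px py; case: (hP) => _ hD _; apply: hD => //; apply: submodN. Qed.

Lemma gen_submodP (M : lmodType R) (X : M -> Prop) : is_submod (gen_submod X).
Proof.
split=> [P [h0 _ _] _ //|x y hx hy P hP hX|a x hx P hP hX].
- by case: (hP) => _ hD _; apply: hD; [apply: hx|apply: hy].
- by case: (hP) => _ _ hZ; apply: hZ; apply: hx.
Qed.

Lemma gen_submod_in (M : lmodType R) (X : M -> Prop) x : X x -> gen_submod X x.
Proof. by move=> hx P _ hX; apply: hX. Qed.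

Lemma gen_submod_min (M : lmodType R) (X P : M -> Prop) :
  is_submod P -> (forall x, X x -> P x) -> forall m, gen_submod X m -> P m.
Proof. by move=> hP hX m hm; apply: hm. Qed.

Lemma gen_submodS (M : lmodType R) (X Y : M -> Prop) :
  (forall x, X x -> Y x) -> forall m, gen_submod X m -> gen_submod Y m.
Proof.
move=> hXY; apply: gen_submod_min; first exact: gen_submodP.
by move=> x /hXY; apply: gen_submod_in.
Qed.

Lemma submod_preim (M N : lmodType R) (f : M -> N) (P : N -> Prop) :
  linear f -> is_submod P -> is_submod (fun m => P (f m)).
Proof.
move=> lf [h0 hD hZ]; split; first by rewrite lin0.
- by move=> x y hx hy; rewrite linD //; apply: hD.
- by move=> a x hx; rewrite linZ //; apply: hZ.
Qed.

Lemma submod_img (M N : lmodType R) (f : M -> N) (P : M -> Prop) :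
  linear f -> is_submod P -> is_submod (fun n => exists2 m, P m & f m = n).
Proof.
move=> lf [h0 hD hZ]; split; first by exists 0 => //; rewrite lin0.
- move=> x y [m hm <-] [m' hm' <-]; exists (m + m'); first exact: hD.
  by rewrite linD.
- by move=> a x [m hm <-]; exists (a *: m); [apply: hZ | rewrite linZ].
Qed.

Lemma submod_range (M N : lmodType R) (f : M -> N) :
  linear f -> is_submod (fun n => exists m, f m = n).
Proof.
move=> lf; split.
- by exists 0; rewrite lin0.
- by move=> x y [a <-] [a' <-]; exists (a + a'); rewrite linD.
- by move=> c x [a <-]; exists (c *: a); rewrite linZ.
Qed.

End Submodules.

Section WordMetric.
Context {G : groupType} (gens : seq G).
Local Open Scope group_scope.

Lemma word_eval_cat (w1 w2 : seq (G * bool)) :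
  word_eval (w1 ++ w2) = word_eval w1 * word_eval w2.
Proof. by elim: w1 => [|p w IH] /=; rewrite ?mul1g // IH mulgA. Qed.

Lemma dist_le_refl x : dist_le gens x x 0.
Proof. by exists [::]; rewrite /= mulg1. Qed.

Lemma dist_leW x y n m : (n <= m)%N -> dist_le gens x y n -> dist_le gens x y m.
Proof. by move=> hnm [w [h1 h2 h3]]; exists w; split=> //; apply: leq_trans hnm. Qed.

Lemma dist_le_trans x y z n m :
  dist_le gens x y n -> dist_le gens y z m -> dist_le gens x z (n + m).
Proof.
move=> [w [h1 h2 h3]] [w' [h1' h2' h3']]; exists (w ++ w'); split.
- by rewrite /word_ok all_cat -!/(word_ok _ _) h1 h1'.
- by rewrite size_cat leq_add.
- by rewrite word_eval_cat mulgA h3 h3'.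
Qed.

Lemma dist_le_mulL g x y n : dist_le gens (g * x) (g * y) n <-> dist_le gens x y n.
Proof.
suff hL h u v : dist_le gens u v n -> dist_le gens (h * u) (h * v) n.
  by split=> [/(hL g^-1)|/hL //]; rewrite !mulKg.
by move=> [w [h1 h2 h3]]; exists w; split=> //; rewrite -mulgA h3.
Qed.

Lemma enlarge_self (S : G -> Prop) n x : S x -> enlarge gens S n x.
Proof. by move=> hx; exists x => //; apply: dist_leW (dist_le_refl x). Qed.

Lemma enlargeS (S U : G -> Prop) n m :
  (forall x, S x -> U x) -> (n <= m)%N ->
  forall x, enlarge gens S n x -> enlarge gens U m x.
Proof. by move=> hSU hnm x [y /hSU hy hd]; exists y => //; apply: dist_leW hd. Qed.

Lemma enlarge_enlarge (S : G -> Prop) n m x :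
  enlarge gens (enlarge gens S n) m x -> enlarge gens S (n + m) x.
Proof. by move=> [y [z hz hzy] hyx]; exists z => //; apply: dist_le_trans hzy hyx. Qed.

Lemma enlarge_meet (S U : G -> Prop) n x :
  enlarge gens (fun y => S y /\ U y) n x -> enlarge gens S n x /\ enlarge gens U n x.
Proof. by move=> [y [hS hU] hd]; split; exists y. Qed.

Definition signed_gens : seq (G * bool) :=
  [seq (g, b) | g <- gens, b <- [:: true; false]].

Fixpoint words_upto n : seq (seq (G * bool)) :=
  if n is n'.+1 then [::] :: [seq p :: w | p <- signed_gens, w <- words_upto n']
  else [:: [::]].

Lemma words_uptoP n w : word_ok gens w -> (size w <= n)%N -> w \in words_upto n.
Proof.
elim: n w => [|n IH] [|p w] //=; rewrite ?inE ?eqxx //.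
move=> /andP [hp hw] hs; apply/orP; right.
apply/allpairsP; exists (p, w); split => //=; last exact: IH.
case: p hp {hw hs} => g b hg; apply/allpairsP; exists (g, b); split => //.
by case: b {hg}.
Qed.

Lemma bounded_set_finite (S : G -> Prop) :
  bounded_set gens S -> exists L : seq G, forall y, S y -> y \in L.
Proof.
move=> [x [n hn]]; exists [seq x * word_eval w | w <- words_upto n] => y /hn.
by move=> [w [h1 h2 <-]]; apply/mapP; exists w => //; apply: words_uptoP.
Qed.

End WordMetric.

Section Filtrations.
Context {R : pzRingType} {G : groupType} (gens : seq G).

Definition filt_le (M : lmodType R) (F F' : filtration M) (k : nat) : Prop :=
  forall S m, F S m -> F' (enlarge gens S k) m.

Definition filt_monotone (M : lmodType R) (F : @filtration R G M) : Prop :=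
  forall S U, (forall x, S x -> U x) -> forall m, F S m -> F U m.

Lemma insular_bounded_equiv (M : lmodType R) (F F' : filtration M) k1 k2 :
  filt_monotone F' -> filt_le F' F k1 -> filt_le F F' k2 ->
  insular gens F -> insular gens F'.
Proof.
move=> hm h1 h2 [d hd]; exists (k1 + d + k2)%N => S U m hS hU.
have := h2 _ _ (hd _ _ _ (h1 _ _ hS) (h1 _ _ hU)); apply: hm => x.
move/enlarge_meet => [hx1 hx2]; split.
- by apply: enlarge_enlarge; apply: enlargeS hx1 => // y; apply: enlarge_enlarge.
- by apply: enlarge_enlarge; apply: enlargeS hx2 => // y; apply: enlarge_enlarge.
Qed.

Lemma insular_pair (T M N : Type)
    (F1 : (G -> Prop) -> M -> Prop) (F2 : (G -> Prop) -> N -> Prop)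
    (u : T -> M) (v : T -> N) :
  (forall S U, (forall x, S x -> U x) -> forall m, F1 S m -> F1 U m) ->
  (forall S U, (forall x, S x -> U x) -> forall m, F2 S m -> F2 U m) ->
  (exists d, forall S U m, F1 S m -> F1 U m ->
    F1 (fun y => enlarge gens S d y /\ enlarge gens U d y) m) ->
  (exists d, forall S U m, F2 S m -> F2 U m ->
    F2 (fun y => enlarge gens S d y /\ enlarge gens U d y) m) ->
  exists d, forall S U x, F1 S (u x) /\ F2 S (v x) -> F1 U (u x) /\ F2 U (v x) ->
    F1 (fun y => enlarge gens S d y /\ enlarge gens U d y) (u x) /\
    F2 (fun y => enlarge gens S d y /\ enlarge gens U d y) (v x).
Proof.
move=> m1 m2 [d1 h1] [d2 h2]; exists (maxn d1 d2) => S U x [a1 a2] [b1 b2].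
have hW d y : (d <= maxn d1 d2)%N ->
    enlarge gens S d y /\ enlarge gens U d y ->
    enlarge gens S (maxn d1 d2) y /\ enlarge gens U (maxn d1 d2) y.
  by move=> hd [hS hU]; split; [exact: (enlargeS (fun _ h => h) hd hS) | exact: (enlargeS (fun _ h => h) hd hU)].
split.
- by apply: (m1 _ _ _ _ (h1 _ _ _ a1 b1)) => y; apply: hW; rewrite leq_maxl.
- by apply: (m2 _ _ _ _ (h2 _ _ _ a2 b2)) => y; apply: hW; rewrite leq_maxr.
Qed.

Lemma bbicontrolled_comp (M N P : lmodType R) (F1 : filtration M) (F2 : filtration N)
    (F3 : filtration P) (f : M -> N) (g : N -> P) :
  filt_monotone F1 -> filt_monotone F3 ->
  (forall y, (exists x, g (f x) = g y) -> exists x, f x = y) ->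
  bbicontrolled gens F1 F2 f -> bbicontrolled gens F2 F3 g ->
  bbicontrolled gens F1 F3 (g \o f).
Proof.
move=> m1 m3 hfib [b1 [h1 h1']] [b2 [h2 h2']]; exists (b1 + b2)%N; split.
- move=> S m hm; apply: (m3 _ _ _ _ (h2 _ _ (h1 _ _ hm))) => x.
  exact: enlarge_enlarge.
- move=> S n [m hm] hn.
  have [y hy hgy] := h2' S n (ex_intro _ (f m) hm) hn.
  have [x hx] := hfib y (ex_intro _ m (etrans hm (esym hgy))).
  have [z hz hfz] := h1' _ y (ex_intro _ x hx) hy.
  exists z; last by rewrite /= hfz.
  by apply: (m1 _ _ _ _ hz) => w hw; rewrite addnC; apply: enlarge_enlarge.
Qed.

End Filtrations.

Section GeneratedFiltration.
Context {R : pzRingType} {G : groupType} (gens : seq G).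
Context (M : lmodType R) (act : G -> M -> M) (Sig : seq M).

Lemma sfilt_submod S : is_submod (sfilt act Sig S).
Proof. exact: gen_submodP. Qed.

Lemma sfiltS S U : (forall x, S x -> U x) ->
  forall m, sfilt act Sig S m -> sfilt act Sig U m.
Proof.
move=> hSU; apply: gen_submodS => m [s [sg hsg [hs ->]]].
by exists s, sg => //; split => //; apply: hSU.
Qed.

Lemma sfilt_gen S s sg : S s -> sg \in Sig -> sfilt act Sig S (act s sg).
Proof. by move=> hs hsg; apply: gen_submod_in; exists s, sg. Qed.

Lemma sfilt_subgens (Sig' : seq M) S m :
  {subset Sig <= Sig'} -> sfilt act Sig S m -> sfilt act Sig' S m.
Proof.
move=> hs; apply: gen_submodS => x [s [sg hsg [hS ->]]].
by exists s, sg => //; apply: hs.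
Qed.

Lemma sfilt_splitU (T1 T2 : G -> Prop) m :
  sfilt act Sig (fun y => T1 y \/ T2 y) m ->
  exists m1 m2, [/\ sfilt act Sig T1 m1, sfilt act Sig T2 m2 & m = m1 + m2].
Proof.
have [h01 hD1 hZ1] := sfilt_submod T1; have [h02 hD2 hZ2] := sfilt_submod T2.
apply: (gen_submod_min (P := fun m => exists m1 m2,
  [/\ sfilt act Sig T1 m1, sfilt act Sig T2 m2 & m = m1 + m2])).
  split.
  - by exists 0, 0; rewrite addr0.
  - move=> x y [x1 [x2 [h1 h2 ->]]] [y1 [y2 [h1' h2' ->]]].
    by exists (x1 + y1), (x2 + y2); split; [apply: hD1 | apply: hD2 | rewrite addrACA].
  - move=> a x [x1 [x2 [h1 h2 ->]]].
    by exists (a *: x1), (a *: x2); split; [apply: hZ1 | apply: hZ2 | rewrite scalerDr].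
move=> x [s [sg hsg [[hs|hs] ->]]].
- by exists (act s sg), 0; rewrite addr0; split => //; apply: sfilt_gen.
- by exists 0, (act s sg); rewrite add0r; split => //; apply: sfilt_gen.
Qed.

Lemma sfilt_reduced : reduced (sfilt act Sig).
Proof.
move=> m; apply: (gen_submod_min (P := fun m => m = 0)).
  by split=> [//|x y -> ->|a x ->]; rewrite ?addr0 ?scaler0.
by move=> x [s [sg _ []]].
Qed.

Lemma sfilt_lean : lean gens (sfilt act Sig).
Proof.
exists 0%N => S; apply: gen_submod_min; first exact: gen_submodP.
move=> x [s [sg hsg [hs ->]]]; apply: gen_submod_in; exists s => //.
by apply: sfilt_gen => //; apply: dist_le_refl.
Qed.

Lemma sfilt_loc_fin_gen : loc_fin_gen gens (sfilt act Sig).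
Proof.
move=> S /bounded_set_finite [L hL].
pose inS y := if excluded_middle_informative (S y) then true else false.
have inSP y : inS y <-> S y by rewrite /inS; case: excluded_middle_informative.
exists [seq act y sg | y <- [seq y <- L | inS y], sg <- Sig] => m; split.
- apply: gen_submod_min; first exact: gen_submodP.
  move=> x [s [sg hsg [hs ->]]]; apply: gen_submod_in; apply/allpairsP.
  by exists (s, sg); split => //; rewrite mem_filter hL // andbT; apply/inSP.
- apply: gen_submod_min; first exact: sfilt_submod.
  move=> x /allpairsP [[y sg] [/= hy hsg ->]]; apply: sfilt_gen => //.
  by move: hy; rewrite mem_filter => /andP [/inSP].
Qed.

Hypothesis hact : is_action act.

Lemma action_lin g : linear (act g). Proof. by case: hact. Qed.
Lemma action1 m : act 1%g m = m. Proof. by case: hact. Qed.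
Lemma actionM g h m : act (g * h)%g m = act g (act h m). Proof. by case: hact. Qed.

Lemma sfilt_translate g S m :
  sfilt act Sig S m -> sfilt act Sig (fun y => S (g^-1 * y)%g) (act g m).
Proof.
apply: (gen_submod_min (P := fun m => sfilt act Sig _ (act g m))).
  by apply: submod_preim; [apply: action_lin | apply: sfilt_submod].
move=> x [s [sg hsg [hs ->]]]; rewrite -actionM; apply: sfilt_gen => //.
by rewrite mulKg.
Qed.

Hypothesis hgen : generates_group gens.

Lemma sfilt_ball m :
  sfilt act Sig (fun _ => True) m -> exists k, sfilt act Sig (ball gens 1%g k) m.
Proof.
have ballW k k' : (k <= k')%N ->
    forall m, sfilt act Sig (ball gens 1%g k) m -> sfilt act Sig (ball gens 1%g k') m.
  by move=> hk; apply: sfiltS => z; apply: dist_leW.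
apply: (gen_submod_min (P := fun m => exists k, sfilt act Sig (ball gens 1%g k) m)).
  split.
  - by exists 0%N; case: (sfilt_submod (ball gens 1%g 0)).
  - move=> x y [k hk] [k' hk']; exists (maxn k k').
    case: (sfilt_submod (ball gens 1%g (maxn k k'))) => _ hD _.
    by apply: hD; [apply: ballW hk; rewrite leq_maxl | apply: ballW hk'; rewrite leq_maxr].
  - move=> a x [k hk]; exists k.
    by case: (sfilt_submod (ball gens 1%g k)) => _ _ hZ; apply: hZ.
move=> x [s [sg hsg [_ ->]]]; have [w [hw hws]] := hgen s.
by exists (size w); apply: sfilt_gen => //; exists w; split => //; rewrite mul1g.
Qed.

End GeneratedFiltration.

Section EquivariantMaps.
Context {R : pzRingType} {G : groupType} (gens : seq G).
Context (M N : lmodType R) (actM : G -> M -> M) (actN : G -> N -> N) (f : M -> N).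
Hypotheses (lf : linear f) (hf : forall g m, f (actM g m) = actN g (f m)).

Lemma sfilt_map (SM : seq M) S m :
  is_action actN -> sfilt actM SM S m -> sfilt actN (map f SM) S (f m).
Proof.
move=> haN; apply: (gen_submod_min (P := fun m => sfilt actN _ S (f m))).
  by apply: submod_preim => //; apply: sfilt_submod.
move=> x [s [sg hsg [hs ->]]]; rewrite hf; apply: sfilt_gen => //.
exact: map_f.
Qed.

Lemma sfilt_map_inv (SM : seq M) S n :
  is_action actM -> sfilt actN (map f SM) S n -> exists2 m, sfilt actM SM S m & f m = n.
Proof.
move=> haM.
apply: (gen_submod_min (P := fun n => exists2 m, sfilt actM SM S m & f m = n)).
  by apply: submod_img => //; apply: sfilt_submod.
move=> x [s [sg /mapP [sg' hsg' ->] [hs ->]]].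
by exists (actM s sg'); [apply: sfilt_gen | rewrite hf].
Qed.

Lemma sfilt_hom_controlled (SM : seq M) (SN : seq N) :
  generates_group gens -> is_action actN -> generates_mod actN SN ->
  exists k, forall S m, sfilt actM SM S m -> sfilt actN SN (enlarge gens S k) (f m).
Proof.
move=> hgen haN hgN.
have [k hk] : exists k, forall sg, sg \in SM -> sfilt actN SN (ball gens 1%g k) (f sg).
  elim: SM => [|sg SM [k hk]]; first by exists 0%N.
  have [k' hk'] := sfilt_ball hgen (hgN (f sg)).
  exists (maxn k k') => x; rewrite inE => /orP [/eqP ->|/hk hx].
  + by apply: (sfiltS _ hk') => z; apply: dist_leW; rewrite leq_maxr.
  + by apply: (sfiltS _ hx) => z; apply: dist_leW; rewrite leq_maxl.
exists k => S; apply: (gen_submod_min (P := fun m => sfilt actN SN _ (f m))).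
  by apply: submod_preim => //; apply: sfilt_submod.
move=> x [s [sg hsg [hs ->]]]; rewrite hf.
apply: (sfiltS _ (sfilt_translate haN (g := s) (hk _ hsg))) => y hy.
by exists s => //; apply/(dist_le_mulL _ s^-1); rewrite mulVg.
Qed.

End EquivariantMaps.

Section GeneratedObjects.
Context {R : pzRingType} {G : groupType} (gens : seq G).
Hypothesis hgen : generates_group gens.
Context (M : lmodType R) (act : G -> M -> M) (Sig : seq M).
Hypothesis hact : is_action act.

(* Any two finite generating sets give boundedly equivalent filtrations, so
   insularity for the witness of proper generation transfers to [Sig]. *)
Lemma sfilt_B_obj : generates_mod act Sig -> properly_generated gens act ->
  B_obj gens (sfilt act Sig).
Proof.
move=> hg [Sig' [hg' _ hins]]; split.
- by split => //; [exact: sfilt_submod | exact: sfiltS].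
- exact: sfilt_reduced.
- exact: sfilt_lean.
- have lid : linear (@id M) by [].
  have [k1 h1] := sfilt_hom_controlled lid (fun _ _ => erefl) Sig hgen hact hg'.
  have [k2 h2] := sfilt_hom_controlled lid (fun _ _ => erefl) Sig' hgen hact hg.
  by apply: (insular_bounded_equiv (k1 := k1) (k2 := k2) _ h1 h2 hins); exact: sfiltS.
- exact: sfilt_loc_fin_gen.
Qed.

Lemma sfilt_Beq_obj : B_obj gens (sfilt act Sig) -> Beq_obj gens (sfilt act Sig) act.
Proof.
move=> hB; split => // [m|g1 g2 m|g]; [exact: action1 | exact: actionM |].
split; first exact: action_lin.
- move=> S m hm; rewrite /translate.
  by apply: sfiltS (sfilt_translate hact (g := g) hm) => y hy; apply: enlarge_self.
- exists (act g^-1%g); split.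
  + by move=> m; rewrite -actionM // mulVg action1.
  + by move=> m; rewrite -actionM // mulgV action1.
  + move=> S m hm; apply: sfiltS (sfilt_translate hact (g := g^-1) hm) => y.
    by rewrite invgK mulKg; apply: enlarge_self.
Qed.

End GeneratedObjects.

Section InsularQuotient.
Context {R : pzRingType} {G : groupType} (gens : seq G).

(* Two representatives [x], [y] of [q] differ by [j a]; splitting [a] along
   [S \/ U] yields a common representative close to both [S] and [U]. *)
Lemma insular_quotient (M Q A : lmodType R) (FM : @filtration R G M) (FQ : @filtration R G Q)
    (actA : G -> A -> A) (SA : seq A) (j : A -> M) (pi : M -> Q) (cA bA : nat) :
  (forall S, is_submod (FM S)) -> filt_monotone FM -> insular gens FM ->
  linear j -> linear pi ->
  (forall S a, sfilt actA SA S a -> FM (enlarge gens S cA) (j a)) ->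
  (forall S a, FM S (j a) -> sfilt actA SA (enlarge gens S bA) a) ->
  (forall x, pi x = 0 <-> exists a, j a = x) ->
  (forall S q, FQ S q <-> exists2 x, FM S x & pi x = q) ->
  insular gens FQ.
Proof.
move=> hsub hmM [d hd] lj lpi hjc hjb hker hQ.
exists (bA + cA + d)%N => S U q /hQ [x hx hxq] /hQ [y hy hyq].
have [a ha] : exists a, j a = x - y by apply/hker; rewrite linB // hxq hyq subrr.
have hSU : FM (fun z => S z \/ U z) (j a).
  rewrite ha; apply: submodB => //.
  - by apply: (hmM _ _ _ _ hx) => z; left.
  - by apply: (hmM _ _ _ _ hy) => z; right.
have hSU' : sfilt actA SA (fun z => enlarge gens S bA z \/ enlarge gens U bA z) a.
  apply: (sfiltS _ (hjb _ _ hSU)) => z [w [hw|hw] hd'].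
  - by left; exists w.
  - by right; exists w.
have [a1 [a2 [h1 h2 e]]] := sfilt_splitU hSU'.
pose z := x - j a1.
have ez : z = y + j a2.
  have e' : x - y = j a1 + j a2 by rewrite -ha e linD.
  by rewrite /z -[x](subrK y) e' addrAC [j a1 + j a2 - _]addrAC subrr add0r addrC.
have hzS : FM (enlarge gens S (bA + cA)) z.
  apply: submodB => //.
  - by apply: (hmM _ _ _ _ hx) => w hw; apply: enlarge_self.
  - by apply: (hmM _ _ _ _ (hjc _ _ h1)) => w; apply: enlarge_enlarge.
have hzU : FM (enlarge gens U (bA + cA)) z.
  rewrite ez; case: (hsub (enlarge gens U (bA + cA))) => _ hD _; apply: hD.
  - by apply: (hmM _ _ _ _ hy) => w hw; apply: enlarge_self.
  - by apply: (hmM _ _ _ _ (hjc _ _ h2)) => w; apply: enlarge_enlarge.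
have hja1 : pi (j a1) = 0 by apply/hker; exists a1.
apply/hQ; exists z; last by rewrite /z linB // hja1 subr0.
by apply: (hmM _ _ _ _ (hd _ _ _ hzS hzU)) => w [hw1 hw2]; split; apply: enlarge_enlarge.
Qed.

End InsularQuotient.

Section Quotient.
Context {R : pzRingType} (M : lmodType R) (N : M -> Prop).
Hypothesis hN : is_submod N.

(* A choice of representative per coset: quotients by arbitrary
   (non-decidable) submodules are built as the subtype of fixed points. *)
Definition canon (x : M) : M := epsilon (inhabits (0 : M)) (fun y => N (y - x)).

Lemma canon_spec x : N (canon x - x).
Proof.
rewrite /canon; apply: (epsilon_spec (inhabits (0 : M)) (fun y => N (y - x))).
by exists x; rewrite subrr; case: hN.
Qed.

Lemma canon_eqP x y : canon x = canon y <-> N (x - y).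
Proof.
split=> [e|hxy].
  have := submodB hN (canon_spec y) (canon_spec x).
  by rewrite e opprB addrC addrA subrK.
rewrite /canon; congr epsilon; apply: functional_extensionality => z.
apply: propositional_extensionality; split => hz.
- have -> : z - y = (z - x) + (x - y) by rewrite addrA subrK.
  by case: hN => _ hD _; apply: hD.
- have -> : z - x = (z - y) - (x - y) by rewrite opprB addrA subrK.
  exact: submodB.
Qed.

Lemma canon_idem x : canon (canon x) = canon x.
Proof. by apply/canon_eqP; apply: canon_spec. Qed.

(* Indexing the carrier by the closure proofs gives each quotient (and each
   submodule below) its own type constant to carry the module instances. *)
Definition quot_of (h : is_submod N) := {x : M | canon x == x}.
Definition quot := quot_of hN.
HB.instance Definition _ := [Choice of quot by <:].

Definition qpi (x : M) : quot := exist _ (canon x) (introT eqP (canon_idem x)).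

Lemma qpi_val (q : quot) : qpi (val q) = q.
Proof. by apply: val_inj => /=; case: q => x /= /eqP. Qed.

Lemma qpiP x y : qpi x = qpi y <-> N (x - y).
Proof.
rewrite -canon_eqP; split; first by move/(congr1 val).
by move=> e; apply: val_inj.
Qed.

Lemma quot_ind (P : quot -> Prop) : (forall x, P (qpi x)) -> forall q, P q.
Proof. by move=> h q; rewrite -(qpi_val q). Qed.

Definition qadd (q r : quot) : quot := qpi (val q + val r).
Definition qopp (q : quot) : quot := qpi (- val q).
Definition qscale (a : R) (q : quot) : quot := qpi (a *: val q).

Lemma qaddE x y : qadd (qpi x) (qpi y) = qpi (x + y).
Proof.
apply/qpiP => /=; rewrite opprD addrACA.
by case: hN => _ hD _; apply: hD; apply: canon_spec.
Qed.

Lemma qoppE x : qopp (qpi x) = qpi (- x).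
Proof. by apply/qpiP => /=; rewrite -opprD; apply: submodN => //; apply: canon_spec. Qed.

Lemma qscaleE a x : qscale a (qpi x) = qpi (a *: x).
Proof.
apply/qpiP => /=; rewrite -scalerBr.
by case: hN => _ _ hZ; apply: hZ; apply: canon_spec.
Qed.

Lemma qaddA : associative qadd.
Proof.
by elim/quot_ind => x; elim/quot_ind => y; elim/quot_ind => z; rewrite !qaddE addrA.
Qed.
Lemma qaddC : commutative qadd.
Proof. by elim/quot_ind => x; elim/quot_ind => y; rewrite !qaddE addrC. Qed.
Lemma qadd0 : left_id (qpi 0) qadd.
Proof. by elim/quot_ind => x; rewrite qaddE add0r. Qed.
Lemma qaddN : left_inverse (qpi 0) qopp qadd.
Proof. by elim/quot_ind => x; rewrite qoppE qaddE addNr. Qed.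

HB.instance Definition _ := GRing.isZmodule.Build quot qaddA qaddC qadd0 qaddN.

Lemma qpiD x y : qpi x + qpi y = qpi (x + y). Proof. exact: qaddE. Qed.

Lemma qscaleA a b v : qscale a (qscale b v) = qscale (a * b) v.
Proof. by elim/quot_ind: v => x; rewrite !qscaleE scalerA. Qed.
Lemma qscale1 : left_id 1 qscale.
Proof. by elim/quot_ind => x; rewrite qscaleE scale1r. Qed.
Lemma qscaleDr : right_distributive qscale +%R.
Proof.
by move=> a; elim/quot_ind => x; elim/quot_ind => y; rewrite qpiD !qscaleE qpiD scalerDr.
Qed.
Lemma qscaleDl v : {morph qscale^~ v: a b / a + b}.
Proof. by move=> a b; elim/quot_ind: v => x; rewrite !qscaleE qpiD scalerDl. Qed.

HB.instance Definition _ :=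
  GRing.Zmodule_isLmodule.Build R quot qscaleA qscale1 qscaleDr qscaleDl.

Lemma qpiZ a x : a *: qpi x = qpi (a *: x). Proof. exact: qscaleE. Qed.

Lemma qpi_lin : linear qpi.
Proof. by move=> a x y; rewrite qpiZ qpiD. Qed.

Lemma qpi0 x : qpi x = 0 <-> N x.
Proof. by rewrite (_ : 0 = qpi 0) // qpiP subr0. Qed.

Lemma qpi_surj (q : quot) : exists x, qpi x = q.
Proof. by exists (val q); apply: qpi_val. Qed.

Lemma qpi_factor (X : lmodType R) (h : M -> X) :
  linear h -> (forall x, N x -> h x = 0) -> forall x, h (val (qpi x)) = h x.
Proof.
move=> lh hN0 x; apply/eqP; rewrite -subr_eq0 -linB //; apply/eqP; apply: hN0.
exact: canon_spec.
Qed.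

End Quotient.

Section QuotientAction.
Context {R : pzRingType} {G : groupType} (M : lmodType R) (N : M -> Prop).
Hypothesis hN : is_submod N.
Context (act : G -> M -> M).
Hypotheses (hact : is_action act) (hNact : forall g m, N m -> N (act g m)).

Definition qact g (q : quot hN) : quot hN := qpi hN (act g (val q)).

Lemma qactE g x : qact g (qpi hN x) = qpi hN (act g x).
Proof.
apply/qpiP; rewrite -linB; last exact: action_lin.
by apply: hNact; apply: canon_spec.
Qed.

Lemma qact_action : is_action qact.
Proof.
split.
- move=> g a; elim/(@quot_ind _ _ _ hN) => x; elim/(@quot_ind _ _ _ hN) => y.
  by rewrite qpiZ qpiD !qactE qpiZ qpiD (action_lin hact).
- by elim/(@quot_ind _ _ _ hN) => x; rewrite qactE action1.
- by move=> g h; elim/(@quot_ind _ _ _ hN) => x; rewrite !qactE actionM.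
Qed.

End QuotientAction.

Section SubModule.
Context {R : pzRingType} (M : lmodType R) (P : pred M).
Hypotheses (P0 : P 0) (PD : forall x y, P x -> P y -> P (x + y))
  (PZ : forall a x, P x -> P (a *: x)).

Definition subm_of (h0 : P 0) (hD : forall x y, P x -> P y -> P (x + y))
  (hZ : forall a x, P x -> P (a *: x)) := {x : M | P x}.
Definition subm := subm_of P0 PD PZ.
HB.instance Definition _ := [Choice of subm by <:].

Let PN x : P x -> P (- x). Proof. by move=> h; rewrite -scaleN1r; apply: PZ. Qed.

Definition szero : subm := exist _ 0 P0.
Definition sopp (q : subm) : subm := exist _ (- val q) (PN (valP q)).
Definition sadd (q r : subm) : subm := exist _ (val q + val r) (PD (valP q) (valP r)).
Definition sscale a (q : subm) : subm := exist _ (a *: val q) (PZ a (valP q)).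

Lemma saddA : associative sadd. Proof. by move=> *; apply: val_inj; rewrite /= addrA. Qed.
Lemma saddC : commutative sadd. Proof. by move=> *; apply: val_inj; rewrite /= addrC. Qed.
Lemma sadd0 : left_id szero sadd. Proof. by move=> *; apply: val_inj; rewrite /= add0r. Qed.
Lemma saddN : left_inverse szero sopp sadd.
Proof. by move=> *; apply: val_inj; rewrite /= addNr. Qed.
HB.instance Definition _ := GRing.isZmodule.Build subm saddA saddC sadd0 saddN.

Lemma sscaleA a b v : sscale a (sscale b v) = sscale (a * b) v.
Proof. by apply: val_inj; rewrite /= scalerA. Qed.
Lemma sscale1 : left_id 1 sscale. Proof. by move=> *; apply: val_inj; rewrite /= scale1r. Qed.
Lemma sscaleDr : right_distributive sscale +%R.
Proof. by move=> *; apply: val_inj; rewrite /= scalerDr. Qed.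
Lemma sscaleDl v : {morph sscale^~ v: a b / a + b}.
Proof. by move=> *; apply: val_inj; rewrite /= scalerDl. Qed.
HB.instance Definition _ :=
  GRing.Zmodule_isLmodule.Build R subm sscaleA sscale1 sscaleDr sscaleDl.

End SubModule.

Section BxMorphisms.
Context {R : pzRingType} {G : groupType} (gens : seq G).
Hypothesis hgen : generates_group gens.
Local Notation Bx := (@Bx_obj R G gens).
Local Notation sF A := (@s_filt R G gens A).

Lemma bx_B_obj (A : Bx) : B_obj gens (sF A).
Proof. by apply: sfilt_B_obj => //; [apply: bx_actP | apply: bx_gensP | apply: bx_proper]. Qed.

Lemma bx_hom_controlled (A B : Bx) (f : bx_mod A -> bx_mod B) :
  Bx_hom f -> bcontrolled gens (sF A) (sF B) f.
Proof. by move=> [lf hf]; apply: sfilt_hom_controlled => //; [apply: bx_actP | apply: bx_gensP]. Qed.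

Lemma Bx_hom_comp (A B C : Bx) (f : bx_mod A -> bx_mod B) (g : bx_mod B -> bx_mod C) :
  Bx_hom f -> Bx_hom g -> Bx_hom (g \o f).
Proof. by move=> [lf hf] [lg hg]; split; [exact: lin_comp | move=> h m /=; rewrite hf hg]. Qed.

Lemma bbicontrolled_id (A : Bx) : bbicontrolled gens (sF A) (sF A) id.
Proof.
exists 0%N; split=> [S m hm | S n _ hn]; last exists n => //.
  by apply: sfiltS hm => w; apply: enlarge_self.
by apply: sfiltS hn => w; apply: enlarge_self.
Qed.

Definition bicontrolled_ses (A B C : Bx) (i : bx_mod A -> bx_mod B)
    (p : bx_mod B -> bx_mod C) : Prop :=
  [/\ Bx_hom i, Bx_hom p, injective i, (forall c, exists b, p b = c) &
    [/\ (forall b, p b = 0 <-> exists a, i a = b),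
        bbicontrolled gens (sF A) (sF B) i & bbicontrolled gens (sF B) (sF C) p]].

(* Kernel and cokernel maps are chosen pointwise; linearity and equivariance
   follow from injectivity of [i], resp. from [p] identifying exactly the
   [i]-translates. *)
Lemma ses_kercoker (A B C : Bx) (i : bx_mod A -> bx_mod B) (p : bx_mod B -> bx_mod C) :
  Bx_hom i -> Bx_hom p -> injective i -> (forall c, exists b, p b = c) ->
  (forall b, p b = 0 <-> exists a, i a = b) -> Bx_kercoker i p.
Proof.
move=> [li hi] [lp hp] ii sp hex.
have pi0 a : p (i a) = 0 by apply/hex; exists a.
split; [by split | by split | split=> // X f [lf hf] hpf | split=> // X f [lf hf] hfi].
- pose g x := epsilon (inhabits 0) (fun a => i a = f x).
  have hg x : i (g x) = f x.
    by apply: (epsilon_spec (inhabits 0) (fun a => i a = f x)); apply/hex.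
  exists g; split => [|//|g' _ hg' x]; last by apply: ii; rewrite hg' hg.
  split=> [a x y|h x]; apply: ii; first by rewrite li !hg lf.
  by rewrite hi !hg hf.
- pose s c := epsilon (inhabits 0) (fun b => p b = c).
  have hs c : p (s c) = c by apply: (epsilon_spec (inhabits 0) (fun b => p b = c)).
  have fib b b' : p b = p b' -> f b = f b'.
    move=> e; have : p (b - b') = 0 by rewrite linB // e subrr.
    by case/hex => a ha; apply/eqP; rewrite -subr_eq0 -linB // -ha hfi.
  exists (fun c => f (s c)); split => [|b|h' _ hh' c]; last by rewrite -hh' hs.
  + split=> [a x y|h x]; [rewrite -lf | rewrite -hf]; apply: fib.
      by rewrite lp !hs.
    by rewrite hp !hs.
  + by apply: fib; rewrite hs.
Qed.

Lemma B_exact_of_ses (A B C : Bx) (i : bx_mod A -> bx_mod B) (p : bx_mod B -> bx_mod C) :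
  bicontrolled_ses i p -> B_exact gens (sF A) (sF B) (sF C) i p.
Proof.
move=> [hi hp ii sp [ex bi bp]]; split => //.
- by split; [|split]; apply: bx_B_obj.
- by split; split; [case: hi | apply: bx_hom_controlled | case: hp | apply: bx_hom_controlled].
Qed.

Lemma Bx_exact_of_ses (A B C : Bx) (i : bx_mod A -> bx_mod B) (p : bx_mod B -> bx_mod C) :
  bicontrolled_ses i p -> Bx_exact i p.
Proof.
move=> hses; have [hi hp ii sp [ex bi bp]] := hses; split.
- exact: ses_kercoker.
- by split.
- by split => //; exists (bx_mod A), (sF A), i; apply: B_exact_of_ses.
Qed.

Definition mkBx (M : lmodType R) (act : G -> M -> M) (Sig : seq M)
  (ha : is_action act) (hg : generates_mod act Sig)
  (hins : insular gens (sfilt act Sig)) : Bx :=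
  @BxObj R G gens M act Sig ha hg
    (ex_intro _ Sig (And3 hg (sfilt_lean gens act Sig) hins)).

Section Cokernel.
Context (A B : Bx) (i : bx_mod A -> bx_mod B).
Hypothesis hi : Bx_adm_mono i.

Let hih : Bx_hom i. Proof. by case: hi. Qed.
Let hN : is_submod (fun b => exists a, i a = b).
Proof. by apply: submod_range; case: hih. Qed.
Let hNact g b : (exists a, i a = b) -> exists a, i a = bx_act g b.
Proof. by case: hih => _ he [a <-]; exists (bx_act g a); rewrite he. Qed.
Let qa := qact (hN := hN) (bx_act (b := B)).
Let qaP : is_action qa := qact_action hN (bx_actP B) hNact.

Lemma qpi_equivariant g m : qpi hN (bx_act g m) = qa g (qpi hN m).
Proof. by rewrite /qa (qactE hN (bx_actP B) hNact). Qed.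

Let QS := map (qpi hN) (bx_gens B).

Lemma coker_sfilt S q : sfilt qa QS S q <-> exists2 x, sF B S x & qpi hN x = q.
Proof.
split=> [|[x hx <-]]; last exact: (sfilt_map (qpi_lin hN) qpi_equivariant qaP hx).
exact: (sfilt_map_inv (qpi_lin hN) qpi_equivariant (bx_actP B)).
Qed.

Lemma coker_gen : generates_mod qa QS.
Proof. by elim/(@quot_ind _ _ _ hN) => x; apply/coker_sfilt; exists x => //; apply: bx_gensP. Qed.

Lemma coker_insular : insular gens (sfilt qa QS).
Proof.
have [cA hc] := bx_hom_controlled hih.
case: hi => _ ii [bA [_ hb]].
apply: (insular_quotient (FM := sF B) (actA := bx_act (b := A)) (SA := bx_gens A)
   (j := i) (pi := qpi hN) (cA := cA) (bA := bA)) => //.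
- by move=> S; apply: sfilt_submod.
- exact: sfiltS.
- by case: (bx_B_obj B).
- by case: hih.
- exact: qpi_lin.
- by move=> S a h; have [m hm /ii <-] := hb S (i a) (ex_intro _ a erefl) h.
- by move=> x; rewrite qpi0.
- exact: coker_sfilt.
Qed.

Definition cokerBx : Bx := mkBx qaP coker_gen coker_insular.

Lemma coker_exact : Bx_exact (C := cokerBx) i (qpi hN).
Proof.
have hp : Bx_hom (A := B) (B := cokerBx) (qpi hN).
  by split; [exact: qpi_lin | exact: qpi_equivariant].
case: (hi) => _ ii bi; apply: Bx_exact_of_ses; split => //.
- exact: qpi_surj.
- split => // [b|]; first by rewrite qpi0.
  exists 0%N; split=> [S m hm | S n _ /coker_sfilt [m hm <-]].
    by apply/coker_sfilt; exists m => //; apply: sfiltS hm => w; apply: enlarge_self.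
  by exists m => //; apply: sfiltS hm => w; apply: enlarge_self.
Qed.

End Cokernel.

Lemma Bx_adm_mono_E_mono (A B : Bx) (i : bx_mod A -> bx_mod B) : Bx_adm_mono i -> E_mono i.
Proof. by move=> hi; exists (cokerBx hi), (qpi _); apply: coker_exact. Qed.

End BxMorphisms.

Section Kernel.
Context {R : pzRingType} {G : groupType} (gens : seq G).
Local Notation Bx := (@Bx_obj R G gens).
Local Notation sF A := (@s_filt R G gens A).

Context (B C : Bx) (p : bx_mod B -> bx_mod C) (A0 : lmodType R) (FA0 : @filtration R G A0)
  (i0 : A0 -> bx_mod B).
Hypotheses (hp : Bx_hom p) (hex : B_exact gens FA0 (sF B) (sF C) i0 p).

Let li : linear i0. Proof. by case: hex => _ [[]]. Qed.
Let ii : injective i0. Proof. by case: hex => _ _ []. Qed.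
Let ex : forall b, p b = 0 <-> exists a, i0 a = b. Proof. by case: hex => _ _ []. Qed.
Let hA0 : B_obj gens FA0. Proof. by case: hex => [[]]. Qed.
Let FA0mono : filt_monotone FA0. Proof. by case: hA0 => [[]]. Qed.

Variables (D b : nat) (KS : seq A0).
Hypothesis hD : forall S m, FA0 S m ->
  gen_submod (fun v => exists2 x, S x & FA0 (ball gens x D) v) m.
Hypothesis hb1 : forall S m, FA0 S m -> sF B (enlarge gens S b) (i0 m).
Hypothesis hb2 : forall S n, (exists m, i0 m = n) -> sF B S n ->
  exists2 m, FA0 (enlarge gens S b) m & i0 m = n.
Hypothesis hKS : forall m,
  FA0 (ball gens 1%g (D + b + b)) m <-> gen_submod (fun x => x \in KS) m.

Definition ker_act g (a : A0) : A0 :=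
  epsilon (inhabits 0) (fun a' => i0 a' = bx_act g (i0 a)).

Lemma ker_actE g a : i0 (ker_act g a) = bx_act g (i0 a).
Proof.
apply: (epsilon_spec (inhabits 0) (fun a' => i0 a' = bx_act g (i0 a))); apply/ex.
case: hp => _ ->; have -> : p (i0 a) = 0 by apply/ex; exists a.
by rewrite (lin0 (action_lin (bx_actP C) g)).
Qed.

Lemma ker_act_action : is_action ker_act.
Proof.
split=> [g a x y|a|g h a]; apply: ii.
- by rewrite li !ker_actE li (action_lin (bx_actP B)).
- by rewrite ker_actE action1 //; apply: bx_actP.
- by rewrite !ker_actE actionM //; apply: bx_actP.
Qed.

(* Each piece [FA0 (ball x D)] is the [x]-translate of a piece over a ball
   around 1 of radius [D + b + b], which is spanned by [KS]. *)
Lemma ker_ball_sfilt x v : FA0 (ball gens x D) v -> sfilt ker_act KS (fun y => y = x) v.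
Proof.
move=> hv; pose v' := ker_act x^-1%g v.
have hv' : FA0 (ball gens 1%g (D + b + b)) v'.
  have := sfilt_translate (bx_actP B) (g := x^-1%g) (hb1 hv); rewrite -ker_actE /v'.
  case/(hb2 (ex_intro _ _ erefl)) => m hm /ii <-; apply: (FA0mono _ hm) => y.
  move=> [z [w hw hwz] hzy]; rewrite invgK in hwz.
  have h2 := dist_le_trans hw hwz; rewrite -{1}(mulg1 x) in h2.
  by apply: dist_le_trans (proj1 (dist_le_mulL gens x _ _ _) h2) hzy.
have hv'' : sfilt ker_act KS (fun y => y = 1%g) v'.
  move/hKS: hv'; apply: gen_submod_min; first exact: sfilt_submod.
  by move=> s hs; rewrite -(action1 ker_act_action s); apply: sfilt_gen.
have <- : ker_act x v' = v.
  by rewrite /v' -(actionM ker_act_action) mulgV (action1 ker_act_action).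
apply: (sfiltS _ (sfilt_translate ker_act_action (g := x) hv'')) => y hy.
by rewrite -[y](mulVKg x) hy mulg1.
Qed.

Lemma ker_sfilt_of_filt S a : FA0 S a -> sfilt ker_act KS (enlarge gens S 0) a.
Proof.
move/hD; apply: gen_submod_min; first exact: sfilt_submod.
move=> v [x hx /ker_ball_sfilt]; apply: sfiltS => y ->; exact: enlarge_self.
Qed.

Lemma ker_filt_of_sfilt S a : sfilt ker_act KS S a -> FA0 (enlarge gens S (D + b + b + b + b)) a.
Proof.
apply: gen_submod_min; first by case: hA0 => [[]].
move=> x [s [sg hsg [hs ->]]].
have hsg' : FA0 (ball gens 1%g (D + b + b)) sg by apply/hKS; apply: gen_submod_in.
have := sfilt_translate (bx_actP B) (g := s) (hb1 hsg'); rewrite -ker_actE.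
case/(hb2 (ex_intro _ _ erefl)) => m hm /ii <-; apply: (FA0mono _ hm) => y.
move=> [z [w hw hwz] hzy]; exists s => //.
have := proj2 (dist_le_mulL gens s _ _ _) (dist_le_trans hw hwz).
by rewrite mulg1 mulVKg => h2; apply: dist_le_trans h2 hzy.
Qed.

Lemma ker_gen : generates_mod ker_act KS.
Proof. by move=> a; apply: (sfiltS _ (ker_sfilt_of_filt (_ : FA0 _ a))); case: hA0 => [[]]. Qed.

Lemma ker_insular : insular gens (sfilt ker_act KS).
Proof.
apply: (insular_bounded_equiv (F := FA0) (k1 := (D + b + b + b + b)%N) (k2 := 0%N)).
- exact: sfiltS.
- by move=> S m /ker_filt_of_sfilt.
- by move=> S m /ker_sfilt_of_filt.
- by case: hA0.
Qed.

Definition kerBx : Bx := mkBx ker_act_action ker_gen ker_insular.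

Lemma ker_ses : bicontrolled_ses (A := kerBx) i0 p.
Proof.
have hi : Bx_hom (A := kerBx) (B := B) i0 by split => // g a; rewrite ker_actE.
split => //; first by case: hex => _ _ [].
split => //; last by case: hex => _ _ _ [].
exists (D + b + b + b + b + b)%N; split.
- move=> S m /ker_filt_of_sfilt /hb1; apply: sfiltS => w; exact: enlarge_enlarge.
- move=> S n hn hS; have [m hm <-] := hb2 hn hS; exists m => //.
  apply: (sfiltS _ (ker_sfilt_of_filt hm)) => w /enlarge_enlarge.
  by apply: enlargeS => //; rewrite addn0 leq_addl.
Qed.

End Kernel.

Section Exactness.
Context {R : pzRingType} {G : groupType} (gens : seq G).
Hypothesis hgen : generates_group gens.
Local Notation Bx := (@Bx_obj R G gens).
Local Notation sF A := (@s_filt R G gens A).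

Lemma Bx_adm_epi_kernel (B C : Bx) (p : bx_mod B -> bx_mod C) :
  Bx_adm_epi p -> exists (K : Bx) (i : bx_mod K -> bx_mod B), bicontrolled_ses i p.
Proof.
move=> [hp [A0 [FA0 [i0 hex]]]].
have [[[_ _ [D hD] _ hfin] _] _ _ [[b [hb1 hb2]] _]] := hex.
have [KS hKS] : fin_gen (FA0 (ball gens 1%g (D + b + b))).
  by apply: hfin; exists 1%g, (D + b + b)%N.
by exists (kerBx hp hex hD hb1 hb2 hKS), i0; apply: ker_ses.
Qed.

Lemma Bx_adm_epi_E_epi (B C : Bx) (p : bx_mod B -> bx_mod C) : Bx_adm_epi p -> E_epi p.
Proof.
by case/Bx_adm_epi_kernel => K [i hses]; exists K, i; apply: Bx_exact_of_ses.
Qed.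

(* [ker p = im i] follows from the kernel property of [i], tested against the
   inclusion of the kernel object of the admissible epimorphism [p]. *)
Lemma Bx_exact_ses (A B C : Bx) (i : bx_mod A -> bx_mod B) (p : bx_mod B -> bx_mod C) :
  Bx_exact i p -> bicontrolled_ses i p.
Proof.
move=> [[hi hp [hpi kerU] _] [_ ii bi] hpe].
have [K [i0 [hi0 _ _ sp [ex _ bp]]]] := Bx_adm_epi_kernel hpe.
split => //; split => // b; split => [/ex [a0 <-]|[a <-] //].
have [g [_ hg _]] := kerU K i0 hi0 (fun x => proj2 (ex _) (ex_intro _ x erefl)).
by exists (g a0); rewrite hg.
Qed.

Lemma s_exact_holds : @s_exact R G gens.
Proof. by move=> A B C i p /Bx_exact_ses; apply: B_exact_of_ses. Qed.

Lemma sGamma_exact_holds : @sGamma_exact R G gens.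
Proof.
move=> A B C i p hex; have [hi hp _ _ _] := Bx_exact_ses hex.
have hBeq (X : Bx) : Beq_obj gens (sF X) (bx_act (b := X)).
  by apply: sfilt_Beq_obj; [apply: bx_actP | apply: bx_B_obj].
have hom (X Y : Bx) (f : bx_mod X -> bx_mod Y) :
    Bx_hom f -> Beq_hom gens (sF X) (bx_act (b := X)) (sF Y) (bx_act (b := Y)) f.
  by move=> hf; split; [split; [case: hf | apply: bx_hom_controlled] | case: hf].
by split => //; [split; apply: hom | apply: s_exact_holds].
Qed.

End Exactness.

Section Pullback.
Context {R : pzRingType} {G : groupType} (gens : seq G).
Hypothesis hgen : generates_group gens.
Local Notation Bx := (@Bx_obj R G gens).
Local Notation sF A := (@s_filt R G gens A).

Context (A C C' K : Bx) (p : bx_mod A -> bx_mod C) (i : bx_mod K -> bx_mod A)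
  (f : bx_mod C' -> bx_mod C).
Hypotheses (hses : bicontrolled_ses i p) (hf : Bx_hom f).

Let hi : Bx_hom i. Proof. by case: hses. Qed.
Let ii : injective i. Proof. by case: hses. Qed.
Let ex : forall b, p b = 0 <-> exists a, i a = b. Proof. by case: hses => _ _ _ _ []. Qed.
Let hp : Bx_hom p. Proof. by case: hses. Qed.
Let lp : linear p. Proof. by case: hp. Qed.
Let li : linear i. Proof. by case: hi. Qed.
Let lf : linear f. Proof. by case: hf. Qed.

Definition pbP (x : bx_mod A * bx_mod C') : bool := p x.1 == f x.2.
Lemma pb0 : pbP 0. Proof. by rewrite /pbP /= !lin0. Qed.
Lemma pbD x y : pbP x -> pbP y -> pbP (x + y).
Proof. by rewrite /pbP /= => /eqP hx /eqP hy; rewrite !linD // hx hy. Qed.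
Lemma pbZ a x : pbP x -> pbP (a *: x).
Proof. by rewrite /pbP /= => /eqP hx; rewrite !linZ // hx. Qed.

Local Notation PBM := (subm pb0 pbD pbZ).

Definition mkPB x (h : pbP x) : PBM := exist (fun x => pbP x) x h.
Definition fstv (x : PBM) : bx_mod A := (val x).1.
Definition sndv (x : PBM) : bx_mod C' := (val x).2.

Lemma pb_comm (x : PBM) : p (fstv x) = f (sndv x).
Proof. by apply/eqP; case: x. Qed.

Lemma pb_eqP (x y : PBM) : fstv x = fstv y -> sndv x = sndv y -> x = y.
Proof.
move=> e1 e2; apply: val_inj.
by rewrite [LHS]surjective_pairing [RHS]surjective_pairing; congr pair.
Qed.

Lemma pb_act_closed g (x : PBM) : pbP (bx_act g (fstv x), bx_act g (sndv x)).
Proof. by rewrite /pbP /=; case: hp => _ ->; case: hf => _ ->; rewrite pb_comm. Qed.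

Definition pact g (x : PBM) : PBM := mkPB (pb_act_closed g x).

Lemma pact_action : is_action pact.
Proof.
split=> [g a x y|x|g h x]; apply: pb_eqP; rewrite /fstv /sndv /=;
  by rewrite ?(action_lin (bx_actP _)) ?(action1 (bx_actP _)) ?(actionM (bx_actP _)).
Qed.

Lemma pb_lift_closed (c : bx_mod C') : pbP (epsilon (inhabits 0) (fun a => p a = f c), c).
Proof. by apply/eqP; apply: (epsilon_spec (inhabits 0) (fun a => p a = f c)); case: hses. Qed.

Definition pb_lift c : PBM := mkPB (pb_lift_closed c).

Lemma pb_iota_closed k : pbP (i k, 0).
Proof. by apply/eqP => /=; rewrite lin0 //; apply/ex; exists k. Qed.

Definition pb_iota k : PBM := mkPB (pb_iota_closed k).

Lemma pb_iota_lin : linear pb_iota.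
Proof. by move=> a x y; apply: pb_eqP; rewrite /fstv /sndv /= ?li // scaler0 addr0. Qed.

Lemma pb_iota_equivariant g k : pb_iota (bx_act g k) = pact g (pb_iota k).
Proof.
apply: pb_eqP; rewrite /fstv /sndv /=; first by case: hi => _ ->.
by rewrite (lin0 (action_lin (bx_actP C') g)).
Qed.

Definition pb_gens := map pb_iota (bx_gens K) ++ map pb_lift (bx_gens C').

Lemma pb_sfilt_iota S k : sF K S k -> sfilt pact pb_gens S (pb_iota k).
Proof.
move=> hk; apply: (sfilt_subgens (Sig := map pb_iota (bx_gens K))).
  by move=> x hx; rewrite mem_cat hx.
exact: (sfilt_map pb_iota_lin pb_iota_equivariant pact_action hk).
Qed.

Lemma pb_sfilt_snd S c : sF C' S c -> exists2 x, sfilt pact pb_gens S x & sndv x = c.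
Proof.
apply: (gen_submod_min (P := fun c => exists2 x, sfilt pact pb_gens S x & sndv x = c)).
  by apply: submod_img => //; apply: sfilt_submod.
move=> y [s [sg hsg [hs ->]]]; exists (pact s (pb_lift sg)) => //.
by apply: sfilt_gen => //; rewrite mem_cat; apply/orP; right; apply: map_f.
Qed.

Lemma pb_fst_controlled : exists k, forall S x,
  sfilt pact pb_gens S x -> sF A (enlarge gens S k) (fstv x).
Proof.
have lfst : linear fstv by [].
exact: (sfilt_hom_controlled (actM := pact) (actN := bx_act (b := A)) lfst (fun _ _ => erefl) pb_gens hgen
  (bx_actP A) (@bx_gensP _ _ _ A)).
Qed.

Lemma pb_snd_controlled : exists k, forall S x,
  sfilt pact pb_gens S x -> sF C' (enlarge gens S k) (sndv x).
Proof.
have lsnd : linear sndv by [].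
exact: (sfilt_hom_controlled (actM := pact) (actN := bx_act (b := C')) lsnd (fun _ _ => erefl) pb_gens hgen
  (bx_actP C') (@bx_gensP _ _ _ C')).
Qed.

(* Lift the [C'] component first; the [A] components then differ by an
   element of [ker p = im i], which [i] reflects with bounded control. *)
Lemma pb_sfilt_of_components : exists k, forall S x,
  sF A S (fstv x) -> sF C' S (sndv x) -> sfilt pact pb_gens (enlarge gens S k) x.
Proof.
have [kf hkf] := pb_fst_controlled; have [_ _ _ _ [_ [bI [_ hbI]] _]] := hses.
exists (kf + bI)%N => S x h1 h2; have [y hy ey] := pb_sfilt_snd h2.
have hd : sF A (enlarge gens S kf) (fstv x - fstv y).
  apply: (submodB (sfilt_submod _ _ _) _ (hkf _ _ hy)).
  by apply: (sfiltS _ h1) => w; apply: enlarge_self.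
have [k hk] : exists k, i k = fstv x - fstv y by apply/ex; rewrite linB // !pb_comm ey subrr.
have [k' hk' ek] := hbI _ _ (ex_intro _ k hk) hd.
have {}ek : k' = k by apply: ii; rewrite ek hk.
subst k'.
have -> : x = y + pb_iota k.
  by apply: pb_eqP; rewrite /fstv /sndv /= -?/(fstv _) ?hk ?addr0 // addrC subrK.
have [_ hD _] := sfilt_submod pact pb_gens (enlarge gens S (kf + bI)); apply: hD.
- by apply: (sfiltS _ hy) => w hw; apply: enlarge_self.
- by apply: (sfiltS _ (pb_sfilt_iota hk')) => w; apply: enlarge_enlarge.
Qed.

Lemma pb_gen : generates_mod pact pb_gens.
Proof.
have [k hk] := pb_sfilt_of_components.
by move=> x; apply: sfiltS (hk _ _ (@bx_gensP _ _ _ A _) (@bx_gensP _ _ _ C' _)).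
Qed.

Lemma pb_insular : insular gens (sfilt pact pb_gens).
Proof.
have [[_ _ _ insA _] [_ _ _ insC _]] := (bx_B_obj hgen A, bx_B_obj hgen C').
have [d hd] := insular_pair fstv sndv (@sfiltS _ _ _ _ _) (@sfiltS _ _ _ _ _) insA insC.
have [kf hkf] := pb_fst_controlled; have [ks hks] := pb_snd_controlled.
have [k hk] := pb_sfilt_of_components.
apply: (insular_bounded_equiv (F := fun S x => sF A S (fstv x) /\ sF C' S (sndv x))
  (k1 := maxn kf ks) (k2 := k)).
- exact: sfiltS.
- move=> S x hx; split.
  + by apply: (sfiltS _ (hkf _ _ hx)) => w; apply: enlargeS => //; rewrite leq_maxl.
  + by apply: (sfiltS _ (hks _ _ hx)) => w; apply: enlargeS => //; rewrite leq_maxr.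
- by move=> S x [h1 h2]; apply: hk.
- by exists d.
Qed.

Definition PB : Bx := mkBx pact_action pb_gen pb_insular.

Lemma pb_pullback : Bx_pullback p f (sndv : bx_mod PB -> _) fstv.
Proof.
split; [by [] | exact: pb_comm | move=> X u v [lu hu] [lv hv] huv].
pose h x : bx_mod PB := @mkPB (u x, v x) (introT eqP (huv x)).
exists h; split => // [|h' _ h1 h2 x]; last by apply: pb_eqP; [apply: h1 | apply: h2].
by split=> [a x y|g x]; apply: pb_eqP; rewrite /fstv /sndv /= ?lu ?lv ?hu ?hv.
Qed.

Lemma pb_ses : bicontrolled_ses (A := K) (B := PB) pb_iota sndv.
Proof.
have [kf hkf] := pb_fst_controlled; have [ks hks] := pb_snd_controlled.
have [_ _ _ _ [_ [bI [_ hbI]] _]] := hses.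
split => //.
- by split; [exact: pb_iota_lin | exact: pb_iota_equivariant].
- by move=> k k' /(congr1 fstv) /ii.
- by move=> c; exists (pb_lift c).
split.
- move=> x; split => [hx|[k <-] //].
  have [k hk] : exists k, i k = fstv x by apply/ex; rewrite pb_comm hx lin0.
  by exists k; apply: pb_eqP; rewrite /fstv /sndv /= -?/(fstv _) ?hk ?hx.
- exists (kf + bI)%N; split=> [S k hk | S x [k <-] hx].
    by apply: (sfiltS _ (pb_sfilt_iota hk)) => w; apply: enlarge_self.
  have [k' hk' /ii ek] := hbI _ _ (ex_intro _ k erefl) (hkf _ _ hx); subst k'.
  by exists k => //; apply: (sfiltS _ hk') => w; apply: enlarge_enlarge.
- exists ks; split=> [S x hx | S c _ /pb_sfilt_snd [x hx <-]]; first exact: hks.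
  by exists x => //; apply: (sfiltS _ hx) => w; apply: enlarge_self.
Qed.

End Pullback.

Section Pushout.
Context {R : pzRingType} {G : groupType} (gens : seq G).
Hypothesis hgen : generates_group gens.
Local Notation Bx := (@Bx_obj R G gens).
Local Notation sF A := (@s_filt R G gens A).

Context (A B A' : Bx) (i : bx_mod A -> bx_mod B) (f : bx_mod A -> bx_mod A').
Hypotheses (hi : Bx_adm_mono i) (hf : Bx_hom f).

Let hih : Bx_hom i. Proof. by case: hi. Qed.
Let ii : injective i. Proof. by case: hi. Qed.
Let li : linear i. Proof. by case: hih. Qed.
Let lf : linear f. Proof. by case: hf. Qed.

Local Notation M := (bx_mod A' * bx_mod B)%type.

Definition msum_act g (x : M) : M := (bx_act g x.1, bx_act g x.2).

Lemma msum_act_action : is_action msum_act.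
Proof.
split=> [g a x y|[x y]|g h [x y]]; rewrite /msum_act /=.
- by rewrite !(action_lin (bx_actP _)) [RHS]surjective_pairing.
- by rewrite !(action1 (bx_actP _)).
- by rewrite !(actionM (bx_actP _)).
Qed.

Definition po_rel (a : bx_mod A) : M := (f a, - i a).

Lemma po_rel_lin : linear po_rel.
Proof. by move=> a x y; rewrite /po_rel lf li [RHS]surjective_pairing /= opprD scalerN. Qed.

Let hN : is_submod (fun x => exists a, po_rel a = x) := submod_range po_rel_lin.

Lemma po_rel_act g x : (exists a, po_rel a = x) -> exists a, po_rel a = msum_act g x.
Proof.
move=> [a <-]; exists (bx_act g a); rewrite /po_rel /msum_act /=.
by case: hf => _ ->; case: hih => _ ->; rewrite (linN _ (action_lin (bx_actP _) g)).
Qed.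

Let qa := qact (hN := hN) msum_act.
Let qaP : is_action qa := qact_action hN msum_act_action po_rel_act.

Lemma po_qpi_equivariant g x : qpi hN (msum_act g x) = qa g (qpi hN x).
Proof. by rewrite /qa (qactE hN msum_act_action po_rel_act). Qed.

Definition inl_m (a : bx_mod A') : M := (a, 0).
Definition inr_m (b : bx_mod B) : M := (0, b).

Lemma inl_m_lin : linear inl_m.
Proof. by move=> a x y; rewrite /inl_m [RHS]surjective_pairing /= scaler0 addr0. Qed.
Lemma inr_m_lin : linear inr_m.
Proof. by move=> a x y; rewrite /inr_m [RHS]surjective_pairing /= scaler0 addr0. Qed.
Lemma inl_m_equivariant g a : inl_m (bx_act g a) = msum_act g (inl_m a).
Proof. by rewrite /inl_m /msum_act /= (lin0 (action_lin (bx_actP _) g)). Qed.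
Lemma inr_m_equivariant g b : inr_m (bx_act g b) = msum_act g (inr_m b).
Proof. by rewrite /inr_m /msum_act /= (lin0 (action_lin (bx_actP _) g)). Qed.

Lemma inl_inr_m (x : M) : x = inl_m x.1 + inr_m x.2.
Proof. by rewrite /inl_m /inr_m [RHS]surjective_pairing /= addr0 add0r -surjective_pairing. Qed.

Definition msum_gens := map inl_m (bx_gens A') ++ map inr_m (bx_gens B).

Definition msum_filt (S : G -> Prop) (x : M) : Prop := sF A' S x.1 /\ sF B S x.2.

Lemma msum_filt_submod S : is_submod (msum_filt S).
Proof.
have [h0 hD hZ] := sfilt_submod (bx_act (b := A')) (bx_gens A') S.
have [h0' hD' hZ'] := sfilt_submod (bx_act (b := B)) (bx_gens B) S.
split => //.
- by move=> x y [h1 h2] [h3 h4]; split; [apply: hD | apply: hD'].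
- by move=> a x [h1 h2]; split; [apply: hZ | apply: hZ'].
Qed.

Lemma msum_sfilt S x : sfilt msum_act msum_gens S x <-> msum_filt S x.
Proof.
split.
  apply: gen_submod_min; first exact: msum_filt_submod.
  move=> y [s [sg hsg [hs ->]]]; rewrite /msum_filt /msum_act /=.
  move: hsg; rewrite mem_cat => /orP [] /mapP [z hz ->] /=.
  - rewrite (lin0 (action_lin (bx_actP _) s)); split; first exact: sfilt_gen.
    by case: (sfilt_submod (bx_act (b := B)) (bx_gens B) S).
  - rewrite (lin0 (action_lin (bx_actP _) s)); split; last exact: sfilt_gen.
    by case: (sfilt_submod (bx_act (b := A')) (bx_gens A') S).
move=> [h1 h2]; rewrite (inl_inr_m x).
have [_ hD _] := sfilt_submod msum_act msum_gens S; apply: hD.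
- apply: (sfilt_subgens (Sig := map inl_m (bx_gens A'))).
    by move=> z hz; rewrite mem_cat hz.
  exact: (sfilt_map inl_m_lin inl_m_equivariant msum_act_action h1).
- apply: (sfilt_subgens (Sig := map inr_m (bx_gens B))).
    by move=> z hz; rewrite mem_cat hz orbT.
  exact: (sfilt_map inr_m_lin inr_m_equivariant msum_act_action h2).
Qed.

Let po_gens := map (qpi hN) msum_gens.

Lemma po_sfilt S q : sfilt qa po_gens S q <-> exists2 x, msum_filt S x & qpi hN x = q.
Proof.
split=> [hq|[x /msum_sfilt hx <-]].
  have [x hx <-] := sfilt_map_inv (qpi_lin hN) po_qpi_equivariant msum_act_action hq.
  by exists x => //; apply/msum_sfilt.
exact: (sfilt_map (qpi_lin hN) po_qpi_equivariant qaP hx).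
Qed.

Lemma po_gen : generates_mod qa po_gens.
Proof.
by elim/(@quot_ind _ _ _ hN) => x; apply/po_sfilt; exists x => //; split; apply: bx_gensP.
Qed.

Lemma po_rel_reflect : exists b, forall S a,
  sF B S (- i a) -> sF A (enlarge gens S b) a.
Proof.
have [_ _ [b [_ hb]]] := hi; exists b => S a h.
have /(hb _ _ (ex_intro _ a erefl)) [m hm /ii <- //] : sF B S (i a).
by rewrite -[i a]opprK; apply: (submodN (sfilt_submod _ _ _)).
Qed.

Lemma po_insular : insular gens (sfilt qa po_gens).
Proof.
have [[_ _ _ insA _] [_ _ _ insB _]] := (bx_B_obj hgen A', bx_B_obj hgen B).
have [d hd] := insular_pair fst snd (@sfiltS _ _ _ _ _) (@sfiltS _ _ _ _ _) insA insB.
have [cf hcf] := bx_hom_controlled hgen hf; have [ci hci] := bx_hom_controlled hgen hih.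
have [b hb] := po_rel_reflect.
apply: (insular_quotient (FM := msum_filt) (actA := bx_act (b := A)) (SA := bx_gens A)
   (j := po_rel) (pi := qpi hN) (cA := maxn cf ci) (bA := b)).
- exact: msum_filt_submod.
- by move=> S U hSU x [h1 h2]; split; [apply: (sfiltS hSU h1) | apply: (sfiltS hSU h2)].
- by exists d.
- exact: po_rel_lin.
- exact: qpi_lin.
- move=> S a ha; split => /=.
  + by apply: (sfiltS _ (hcf _ _ ha)) => w; apply: enlargeS => //; rewrite leq_maxl.
  + apply: (submodN (sfilt_submod _ _ _)).
    by apply: (sfiltS _ (hci _ _ ha)) => w; apply: enlargeS => //; rewrite leq_maxr.
- by move=> S a [_ h2]; apply: hb.
- by move=> x; rewrite qpi0.
- exact: po_sfilt.
Qed.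

Definition PO : Bx := mkBx qaP po_gen po_insular.

Definition po_inl (a : bx_mod A') : bx_mod PO := qpi hN (inl_m a).
Definition po_inr (b : bx_mod B) : bx_mod PO := qpi hN (inr_m b).

Lemma po_inl_hom : Bx_hom (A := A') (B := PO) po_inl.
Proof.
split; first exact: lin_comp inl_m_lin (qpi_lin hN).
by move=> g a; rewrite /po_inl inl_m_equivariant po_qpi_equivariant.
Qed.

Lemma po_inr_hom : Bx_hom (A := B) (B := PO) po_inr.
Proof.
split; first exact: lin_comp inr_m_lin (qpi_lin hN).
by move=> g a; rewrite /po_inr inr_m_equivariant po_qpi_equivariant.
Qed.

Lemma po_comm a : po_inr (i a) = po_inl (f a).
Proof.
apply/qpiP; exists (- a); rewrite /po_rel /inl_m /inr_m (linN _ lf) (linN _ li) opprK.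
by rewrite [RHS]surjective_pairing /= sub0r subr0.
Qed.

Lemma po_pushout : Bx_pushout i f (po_inl : _ -> bx_mod PO) po_inr.
Proof.
split; [by split; [exact: po_inl_hom | exact: po_inr_hom] | exact: po_comm |].
move=> X u v [lu hu] [lv hv] huv.
pose h0 (x : M) : bx_mod X := v x.1 + u x.2.
have lh0 : linear h0 by move=> a x y; rewrite /h0 /= lu lv scalerDr addrACA.
have h0N x : (exists a, po_rel a = x) -> h0 x = 0.
  by move=> [a <-]; rewrite /h0 /po_rel /= (linN _ lu) huv subrr.
pose h (q : bx_mod PO) : bx_mod X := h0 (val q).
have hE x : h (qpi hN x) = h0 x := qpi_factor hN lh0 h0N x.
have hh : Bx_hom h.
  split=> [a|g]; elim/(@quot_ind _ _ _ hN) => x.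
    by elim/(@quot_ind _ _ _ hN) => y; rewrite qpiZ qpiD !hE lh0.
  transitivity (h (qpi hN (msum_act g x))); first by rewrite po_qpi_equivariant.
  rewrite !hE /h0 /msum_act /= hu hv.
  by rewrite (linD _ _ (action_lin (@bx_actP _ _ _ X) g)).
exists h; split => //.
- by move=> b; rewrite /po_inr hE /h0 /inr_m /= (lin0 lv) add0r.
- by move=> a; rewrite /po_inl hE /h0 /inl_m /= (lin0 lu) addr0.
- move=> h' [lh' _] h1 h2; elim/(@quot_ind _ _ _ hN) => x.
  rewrite (inl_inr_m x) -qpiD (linD _ _ lh') -/(po_inl x.1) -/(po_inr x.2) h1 h2 qpiD hE.
  by rewrite /h0 /inl_m /inr_m /= addr0 add0r.
Qed.

Lemma po_adm_mono : Bx_adm_mono (A := A') (B := PO) po_inl.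
Proof.
split; first exact: po_inl_hom.
- move=> x y /qpiP [a e].
  have ea : a = 0.
    by apply: ii; move: (congr1 snd e); rewrite /= subrr (lin0 li) => /eqP; rewrite oppr_eq0 => /eqP.
  by move: (congr1 fst e); rewrite /= ea (lin0 lf) => /eqP; rewrite eq_sym subr_eq0 => /eqP.
- have [c hc] := bx_hom_controlled hgen po_inl_hom.
  have [cf hcf] := bx_hom_controlled hgen hf; have [b hb] := po_rel_reflect.
  exists (maxn c (b + cf)); split=> [S m hm|S n [a' <-] /po_sfilt [x [hx1 hx2] /qpiP [a ea]]].
    by apply: (sfiltS _ (hc _ _ hm)) => w; apply: enlargeS => //; rewrite leq_maxl.
  exists a' => //.
  have e2 : x.2 = - i a by move: (congr1 snd ea); rewrite /= subr0.
  have -> : a' = x.1 - f a by move: (congr1 fst ea); rewrite /= => ->; rewrite opprB addrC subrK.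
  rewrite e2 in hx2; apply: (submodB (sfilt_submod _ _ _)).
  + by apply: (sfiltS _ hx1) => w hw; apply: enlarge_self.
  + apply: (sfiltS _ (hcf _ _ (hb _ _ hx2))) => w /enlarge_enlarge.
    by apply: enlargeS => //; rewrite leq_maxr.
Qed.

End Pushout.

Section ExactStructure.
Context {R : pzRingType} {G : groupType} (gens : seq G).
Hypothesis hgen : generates_group gens.
Local Notation Bx := (@Bx_obj R G gens).
Local Notation sF A := (@s_filt R G gens A).

Lemma Bx_iso_bbicontrolled (A B : Bx) (f : bx_mod A -> bx_mod B) :
  Bx_iso f -> bbicontrolled gens (sF A) (sF B) f.
Proof.
move=> [hf [g [hg fK gK]]].
have [cf hcf] := bx_hom_controlled hgen hf; have [cg hcg] := bx_hom_controlled hgen hg.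
exists (maxn cf cg); split=> [S m hm|S n [m <-] hn]; last exists m => //.
  by apply: (sfiltS _ (hcf _ _ hm)) => w; apply: enlargeS => //; rewrite leq_maxl.
rewrite -[m]fK; apply: (sfiltS _ (hcg _ _ hn)) => w.
by apply: enlargeS => //; rewrite leq_maxr.
Qed.

Lemma Bx_iso_inv (A B : Bx) (f : bx_mod A -> bx_mod B) (g : bx_mod B -> bx_mod A) :
  Bx_hom f -> Bx_hom g -> cancel f g -> cancel g f -> Bx_iso g.
Proof. by move=> hf hg fK gK; split => //; exists f. Qed.

Lemma Bx_exact_iso (A B C A' B' C' : Bx) i p i' p' a b c :
  Bx_exact (A := A) (B := B) (C := C) i p ->
  Bx_kercoker (A := A') (B := B') (C := C') i' p' ->
  Bx_iso a -> Bx_iso b -> Bx_iso c ->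
  (forall x, b (i x) = i' (a x)) -> (forall y, c (p y) = p' (b y)) ->
  Bx_exact i' p'.
Proof.
move=> /Bx_exact_ses [hi hp ii sp [ex bi bp]] [hi' hp' _ _] ha hb hc hbi hcp.
have [hah [ai [hai aK aiK]]] := ha; have [hbh [bi' [hbih bK biK]]] := hb.
have [hch [ci [hci cK ciK]]] := hc.
have ei' : i' = b \o i \o ai.
  by apply: functional_extensionality => x /=; rewrite hbi aiK.
have ep' : p' = c \o p \o bi'.
  by apply: functional_extensionality => y /=; rewrite hcp biK.
have bbi_ai := Bx_iso_bbicontrolled (Bx_iso_inv hah hai aK aiK).
have bbi_bi := Bx_iso_bbicontrolled (Bx_iso_inv hbh hbih bK biK).
apply: (Bx_exact_of_ses hgen); split => //.
- by rewrite ei' => x y /= /(can_inj bK) /ii /(can_inj aiK).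
- by move=> z; have [y hy] := sp (ci z); exists (b y); rewrite -hcp hy ciK.
split.
- move=> y; rewrite ep' /=; split => [h|[x <-]].
    have : p (bi' y) = 0 by rewrite -[p _]cK h (lin0 (proj1 hci)).
    by case/ex => x hx; exists (a x); rewrite -(hbi x) hx biK.
  rewrite -{1}(aiK x) -hbi bK.
  have -> : p (i (ai x)) = 0 by apply/ex; exists (ai x).
  by rewrite (lin0 (proj1 hch)).
- rewrite ei'; apply: (bbicontrolled_comp (F2 := sF B) (sfiltS (Sig := _)) (sfiltS (Sig := _))).
  + by move=> y [x e]; exists x; apply: (can_inj bK).
  + apply: (bbicontrolled_comp (F2 := sF A) (sfiltS (Sig := _)) (sfiltS (Sig := _)) _ bbi_ai bi).
    by move=> y [x /ii e]; exists x.
  + exact: Bx_iso_bbicontrolled hb.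
- rewrite ep'; apply: (bbicontrolled_comp (F2 := sF C) (sfiltS (Sig := _)) (sfiltS (Sig := _))).
  + by move=> y _; have [z <-] := sp y; exists (b z); rewrite /= bK.
  + apply: (bbicontrolled_comp (F2 := sF B) (sfiltS (Sig := _)) (sfiltS (Sig := _)) _ bbi_bi bp).
    by move=> y _; exists (b y); rewrite bK.
  + exact: Bx_iso_bbicontrolled hc.
Qed.

Lemma Bx_adm_mono_id (A : Bx) : Bx_adm_mono (A := A) (B := A) id.
Proof. by split; [split | move=> x y | exact: bbicontrolled_id]. Qed.

(* The zero object is the cokernel of the identity. *)
Lemma E_epi_id (A : Bx) : E_epi (B := A) (C := A) id.
Proof.
pose Z := cokerBx hgen (Bx_adm_mono_id A).
have hz (q : bx_mod Z) : q = 0 by rewrite -(qpi_val q); apply/qpi0; exists (val q).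
have h0 : Bx_hom (A := Z) (B := A) (fun _ => 0).
  split; first by move=> a x y; rewrite scaler0 addr0.
  by move=> g m; rewrite (lin0 (action_lin (@bx_actP _ _ _ A) g)).
exists Z, (fun _ => 0); apply: (Bx_exact_of_ses hgen); split => //.
- by move=> x y _; rewrite (hz x) (hz y).
- by move=> c; exists c.
split; last exact: bbicontrolled_id.
- by move=> b; split=> [->|[z <-]]; first exists 0.
- exists 0%N; split=> [S m _|S n [m <-] _].
    by case: (sfilt_submod (bx_act (b := A)) (bx_gens A) (enlarge gens S 0)).
  by exists 0 => //; case: (sfilt_submod (bx_act (b := Z)) (bx_gens Z) (enlarge gens S 0)).
Qed.

Lemma E_mono_comp (A B C : Bx) (i : bx_mod A -> bx_mod B) (j : bx_mod B -> bx_mod C) :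
  E_mono i -> E_mono j -> E_mono (j \o i).
Proof.
move=> [C1 [p1 [_ [hi ii bi] _]]] [C2 [p2 [_ [hj ij bj] _]]].
apply: (Bx_adm_mono_E_mono hgen); split; [exact: Bx_hom_comp | exact: inj_comp |].
apply: (bbicontrolled_comp (F2 := sF B) (sfiltS (Sig := _)) (sfiltS (Sig := _))) => //.
by move=> y [x /ij e]; exists x.
Qed.

(* The kernel of [q \o p] is the pullback of [p] along the kernel of [q]. *)
Lemma E_epi_comp (A B C : Bx) (p : bx_mod A -> bx_mod B) (q : bx_mod B -> bx_mod C) :
  E_epi p -> E_epi q -> E_epi (q \o p).
Proof.
move=> [K1 [i1 /Bx_exact_ses hses1]] [K2 [i2 /Bx_exact_ses hses2]].
have [hi1 hp ii1 sp [ex1 bi1 bp]] := hses1; have [hi2 hq ii2 sq [ex2 bi2 bq]] := hses2.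
pose fs : bx_mod (PB hgen hses1 hi2) -> bx_mod A := fstv (hses := hses1) (hf := hi2).
have hfs : Bx_hom (A := PB hgen hses1 hi2) fs by [].
apply: (Bx_adm_epi_E_epi hgen); split; first exact: Bx_hom_comp.
exists (bx_mod (PB hgen hses1 hi2)), (sF (PB hgen hses1 hi2)), fs.
apply: (B_exact_of_ses hgen); split; [exact: hfs | exact: Bx_hom_comp | | |].
- move=> x y e; apply: pb_eqP => //; apply: ii2.
  by rewrite -!pb_comm; congr p; exact: e.
- by move=> c; have [b <-] := sq c; have [a <-] := sp b; exists a.
split.
- move=> a; split => [/= /ex2 [k hk]|[x <-] /=]; last by rewrite pb_comm; apply/ex2; exists (sndv x).
  have hpb : pbP p i2 (a, k) by apply/eqP.
  by exists (mkPB hses1 hi2 hpb).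
- have [kf hkf] := bx_hom_controlled hgen hfs; have [cp hcp] := bx_hom_controlled hgen hp.
  have [k hk] := pb_sfilt_of_components hgen hses1 hi2.
  have [b2 [_ hb2]] := bi2.
  exists (maxn kf (cp + b2 + k)); split=> [S m hm|S n [x <-] hn].
    by apply: (sfiltS _ (hkf _ _ hm)) => w; apply: enlargeS => //; rewrite leq_maxl.
  exists x => //; have := hcp _ _ hn; rewrite /= pb_comm.
  case/(hb2 _ _ (ex_intro _ _ erefl)) => m hm /ii2 em; subst m.
  have ha : sF A (enlarge gens S (cp + b2)%N) (fs x).
    by apply: (sfiltS _ hn) => w hw; apply: enlarge_self.
  have hb : sF K2 (enlarge gens S (cp + b2)%N) (sndv x).
    by apply: (sfiltS _ hm) => w; apply: enlarge_enlarge.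
  apply: (sfiltS _ (hk _ x ha hb)) => w /enlarge_enlarge.
  by apply: enlargeS => //; rewrite leq_maxr.
- apply: (bbicontrolled_comp (F2 := sF B) (sfiltS (Sig := _)) (sfiltS (Sig := _)) _ bp bq).
  by move=> y _; have [x <-] := sp y; exists x.
Qed.

Lemma Bx_exact_structure_holds : @Bx_exact_structure R G gens.
Proof.
split.
- exact: Bx_exact_iso.
- by split; [exact: Bx_adm_mono_E_mono | exact: Bx_adm_epi_E_epi].
- by move=> A; split; [apply: (Bx_adm_mono_E_mono hgen); exact: Bx_adm_mono_id | exact: E_epi_id].
- by split; [exact: E_mono_comp | exact: E_epi_comp].
split.
- move=> A B A' i f [C [p [_ hi _]]] hf.
  exists (PO hgen hi hf), (po_inl hgen hi hf), (po_inr hgen hi hf).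
  by split; [exact: po_pushout | exact: (Bx_adm_mono_E_mono hgen (po_adm_mono hgen hi hf))].
- move=> A C C' p f [K [i /Bx_exact_ses hses]] hf.
  exists (PB hgen hses hf), (sndv (hses := hses) (hf := hf)), (fstv (hses := hses) (hf := hf)).
  split; first exact: pb_pullback.
  by exists K, (pb_iota hses hf); apply: (Bx_exact_of_ses hgen); apply: pb_ses.
Qed.

End ExactStructure.

Unset Implicit Arguments.

Theorem proposition2p10 (R : pzRingType) (G : groupType) (gens : seq G) :
  noetherian R -> generates_group gens ->
  [/\ @Bx_exact_structure R G gens, @s_exact R G gens & @sGamma_exact R G gens].
Proof.
move=> _ hgen; split.
- exact: (Bx_exact_structure_holds hgen).
- exact: (s_exact_holds hgen).
- exact: (sGamma_exact_holds hgen).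
Qed.
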